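(* (i) Let $\sigma\in\mathbb R^N$ with $\min_{1\le j\le N}\sigma_j>1/2$. Then for all $u,v\in G^{\sigma,0}$, $$\|uv\|_{G^{\sigma,0}}\lesssim\|u\|_{G^{\sigma,0}}\|v\|_{G^{\sigma,0}}.$$ (ii) Let $\sigma_1=0$, $\min_{2\le j\le N}\sigma_j>1/2$ and $\beta>1/4$. Then for all $\hat u,\hat v:\dot{\mathbb Z}^N\to\mathbb C$, $$\Big\|\sum_{k'\in\dot{\mathbb Z}^N,\,k'\neq k}\langle|\alpha\cdot k||\alpha\cdot(k-k')||\alpha\cdot k'|\rangle^{-\beta}|\hat u(k-k')||\hat v(k')|\Big\|_{\hat G^{\sigma,0}_k}\lesssim\|\hat u\|_{\hat G^{\sigma,0}}\|\hat v\|_{\hat G^{\sigma,0}}.$$ The implicit constants depend only on $\sigma,\beta,\alpha,N$.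
   Context: Standing setting: fix $N\in\mathbb N$ and $\alpha\in\mathbb R^N$ with $\alpha\cdot k\neq0$ for all $k\in\dot{\mathbb Z}^N:=\mathbb Z^N\setminus\{0\}$. Write $\langle x\rangle=(1+|x|^2)^{1/2}$. For $\hat f:\dot{\mathbb Z}^N\to\mathbb C$, $$\|\hat f\|_{\hat G^{\sigma,a}}=\Big(\sum_{k\in\dot{\mathbb Z}^N}|\alpha\cdot k|^{2a}\prod_j\langle k_j\rangle^{2\sigma_j}|\hat f(k)|^2\Big)^{1/2},$$ and $\|f\|_{G^{\sigma,a}}=\|\hat f\|_{\hat G^{\sigma,a}}$ for $f=\sum_k\hat f(k)e^{i(\alpha\cdot k)x}$. The product is defined by $\widehat{uv}(k)=\sum_{k'\in\dot{\mathbb Z}^N,\,k'\neq k}\hat u(k-k')\hat v(k')$ for $k\in\dot{\mathbb Z}^N$; the zero mode is discarded. *)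

From Stdlib Require Import Reals Lra ZArith List.
Import ListNotations.
Open Scope R_scope.

Definition Cpx := (R * R)%type.
Definition Cmod (z : Cpx) : R := sqrt (fst z ^ 2 + snd z ^ 2).
Definition Cmul (z w : Cpx) : Cpx :=
  (fst z * fst w - snd z * snd w, fst z * snd w + snd z * fst w).

(* Lattice points of Z^N are lists of integers of length N (index j = 0..N-1,
   so the paper's coordinate j corresponds to index j-1). *)
Definition InZN (N : nat) (k : list Z) : Prop := length k = N.
Definition InDotZN (N : nat) (k : list Z) : Prop :=
  length k = N /\ exists j, (j < N)%nat /\ nth j k 0%Z <> 0%Z.

Definition vsub (N : nat) (k k' : list Z) : list Z :=
  map (fun j => (nth j k 0 - nth j k' 0)%Z) (seq 0 N).

Definition adot (N : nat) (alpha : nat -> R) (k : list Z) : R :=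
  fold_right (fun j acc => alpha j * IZR (nth j k 0%Z) + acc) 0 (seq 0 N).

Definition jbr (x : R) : R := sqrt (1 + x ^ 2).

(* Standing non-resonance hypothesis: alpha . k <> 0 for k in \dot Z^N *)
Definition NonResonant (N : nat) (alpha : nat -> R) : Prop :=
  forall k, InDotZN N k -> adot N alpha k <> 0.

Definition Gweight (N : nat) (alpha sigma : nat -> R) (a : R) (k : list Z) : R :=
  Rpower (Rabs (adot N alpha k)) (2 * a) *
  fold_right (fun j acc => Rpower (jbr (IZR (nth j k 0%Z))) (2 * sigma j) * acc)
    1 (seq 0 N).

Definition lsum {A : Type} (f : A -> R) (F : list A) : R :=
  fold_right (fun x acc => f x + acc) 0 F.

Definition FinSub (D : list Z -> Prop) (F : list (list Z)) : Prop :=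
  NoDup F /\ forall x, In x F -> D x.

(* SqNormLe N alpha sigma a g M :  sum_{k in \dot Z^N} weight(k) * g(k)^2 <= M,
   i.e. every finite partial sum is <= M.  Thus
   ||f||_{G^{sigma,a}} <= sqrt M  iff  SqNormLe ... (fun k => Cmod (f k)) M
   (for M >= 0); the norm is finite iff some such M exists. *)
Definition SqNormLe (N : nat) (alpha sigma : nat -> R) (a : R)
  (g : list Z -> R) (M : R) : Prop :=
  forall F, FinSub (InDotZN N) F ->
    lsum (fun k => Gweight N alpha sigma a k * g k ^ 2) F <= M.

(* Unconditional summation of a real family over a domain D (net of finite subsets). *)
Definition RHasSum (D : list Z -> Prop) (f : list Z -> R) (s : R) : Prop :=
  forall eps, 0 < eps -> exists F0, FinSub D F0 /\
    forall F, FinSub D F -> incl F0 F -> Rabs (lsum f F - s) < eps.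

Definition CHasSum (D : list Z -> Prop) (f : list Z -> Cpx) (s : Cpx) : Prop :=
  RHasSum D (fun x => fst (f x)) (fst s) /\ RHasSum D (fun x => snd (f x)) (snd s).

Definition ConvDom (N : nat) (k : list Z) (k' : list Z) : Prop :=
  InDotZN N k' /\ k' <> k.

Definition IsProduct (N : nat) (u v w : list Z -> Cpx) : Prop :=
  forall k, InDotZN N k ->
    CHasSum (ConvDom N k) (fun k' => Cmul (u (vsub N k k')) (v k')) (w k).

(* Estimates are proved on finite partial sums and
   then passed to the unconditional lattice series.  The core is a weighted Schur
   test: if sum_k' X(k,k')^2 w(k)/(w(k-k') w(k')) <= C uniformly in k, then
   Cauchy-Schwarz in k' gives sum_k w(k) (sum_k' X |u(k-k')| |v(k')|)^2 <= C |u|^2 |v|^2.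
   (i)  X = 1: the Schur sum factorises over coordinates; each factor is bounded by
        Peetre's splitting and the convergence of sum_x <x>^-2s for s > 1/2.
   (ii) As alpha.k = alpha.(k-k') + alpha.k', the resonance factor is dominated by
        <.>^-2beta of the three frequencies.  For alpha.(k-k') and alpha.k' the
        Schur sum over the first coordinate (sigma_1 = 0) converges as 4 beta > 1 and
        alpha_1 <> 0.  For alpha.k one applies Cauchy-Schwarz in the first coordinate
        of k', the Schur test in the others, and sums over the first coordinate of k last. *)

From Stdlib Require Import Reals Lra Lia ZArith List Psatz ClassicalEpsilon.
Import ListNotations.
Open Scope R_scope.

Section ListSums.
Context {A : Type}.

Lemma lsum_cons (f : A -> R) a l : lsum f (a :: l) = f a + lsum f l.
Proof. reflexivity. Qed.

Lemma lsum_app (f : A -> R) l1 l2 : lsum f (l1 ++ l2) = lsum f l1 + lsum f l2.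
Proof. induction l1; simpl; [ring | rewrite IHl1; ring]. Qed.

Lemma lsum_le (f g : A -> R) l :
  (forall x, In x l -> f x <= g x) -> lsum f l <= lsum g l.
Proof.
  induction l as [|a l IH]; simpl; intros H; [lra|].
  assert (f a <= g a) by auto. assert (lsum f l <= lsum g l) by auto. lra.
Qed.

Lemma lsum_nonneg (f : A -> R) l : (forall x, In x l -> 0 <= f x) -> 0 <= lsum f l.
Proof.
  induction l as [|a l IH]; simpl; intros H; [lra|].
  assert (0 <= f a) by auto. assert (0 <= lsum f l) by auto. lra.
Qed.

Lemma lsum_ext (f g : A -> R) l : (forall x, In x l -> f x = g x) -> lsum f l = lsum g l.
Proof. induction l; simpl; intros H; [lra|]. rewrite H, IHl; auto. Qed.

Lemma lsum_scal (c : R) (f : A -> R) l : lsum (fun x => c * f x) l = c * lsum f l.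
Proof. induction l; simpl; [ring | rewrite IHl; ring]. Qed.

Lemma lsum_plus (f g : A -> R) l : lsum (fun x => f x + g x) l = lsum f l + lsum g l.
Proof. induction l; simpl; [ring | rewrite IHl; ring]. Qed.

Lemma lsum_minus (f g : A -> R) l : lsum (fun x => f x - g x) l = lsum f l - lsum g l.
Proof. induction l; simpl; [ring | rewrite IHl; ring]. Qed.

Lemma lsum_incl_le (f : A -> R) (L M : list A) :
  NoDup L -> incl L M -> (forall x, In x M -> 0 <= f x) -> lsum f L <= lsum f M.
Proof.
  revert M. induction L as [|a L IH]; intros M HN Hi Hp; simpl.
  - apply lsum_nonneg; auto.
  - inversion HN as [|? ? HaL HL]; subst.
    destruct (in_split a M (Hi a (or_introl eq_refl))) as [M1 [M2 ->]].
    rewrite lsum_app; simpl.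
    assert (lsum f L <= lsum f (M1 ++ M2)); [|rewrite lsum_app in *; lra].
    apply IH; auto.
    + intros y Hy. assert (Hy' : In y (M1 ++ a :: M2)) by (apply Hi; right; auto).
      apply in_app_or in Hy'. apply in_or_app. destruct Hy' as [H|[H|H]]; subst; tauto.
    + intros y Hy. apply Hp. apply in_app_or in Hy. apply in_or_app. simpl. tauto.
Qed.

Lemma lsum_split_filter (f : A -> R) (p : A -> bool) l :
  lsum f l = lsum f (filter p l) + lsum f (filter (fun x => negb (p x)) l).
Proof. induction l; simpl; [ring|]. destruct (p a); simpl; rewrite IHl; ring. Qed.

Lemma lsum_if_filter (p : A -> bool) (f : A -> R) l :
  lsum (fun y => if p y then f y else 0) l = lsum f (filter p l).
Proof. induction l; simpl; auto. destruct (p a); simpl; rewrite IHl; ring. Qed.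

Lemma lsum_CS (f g : A -> R) l :
  lsum (fun x => f x * g x) l ^ 2 <= lsum (fun x => f x ^ 2) l * lsum (fun x => g x ^ 2) l.
Proof.
  induction l as [|a l IH]; [simpl; lra|]. rewrite !lsum_cons.
  set (S := lsum (fun x => f x * g x) l) in *.
  set (F := lsum (fun x => f x ^ 2) l) in *.
  set (G := lsum (fun x => g x ^ 2) l) in *.
  assert (HF : 0 <= F) by (apply lsum_nonneg; intros; nra).
  assert (HG : 0 <= G) by (apply lsum_nonneg; intros; nra).
  (* the cross term 2 f(a) g(a) S is controlled by AM-GM using S^2 <= F G *)
  assert (H2 : (2 * (f a * g a) * S) ^ 2 <= (f a ^ 2 * G + g a ^ 2 * F) ^ 2).
  { assert (0 <= (f a ^ 2 * G - g a ^ 2 * F) ^ 2) by apply pow2_ge_0.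
    assert (0 <= f a ^ 2) by apply pow2_ge_0. assert (0 <= g a ^ 2) by apply pow2_ge_0.
    assert (f a ^ 2 * g a ^ 2 * S ^ 2 <= f a ^ 2 * g a ^ 2 * (F * G))
      by (apply Rmult_le_compat_l; nra).
    nra. }
  assert (0 <= f a ^ 2 * G + g a ^ 2 * F) by (apply Rplus_le_le_0_compat; apply Rmult_le_pos; nra).
  assert (2 * (f a * g a) * S <= f a ^ 2 * G + g a ^ 2 * F).
  { apply Rsqr_incr_0_var; [unfold Rsqr; simpl in H2; lra | assumption]. }
  nra.
Qed.

Lemma lsum_CS_sqrt (f g : A -> R) l :
  lsum (fun x => f x * g x) l <= sqrt (lsum (fun x => f x ^ 2) l) * sqrt (lsum (fun x => g x ^ 2) l).
Proof.
  rewrite <- sqrt_mult by (apply lsum_nonneg; intros; apply pow2_ge_0).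
  eapply Rle_trans; [apply Rle_abs|]. rewrite <- sqrt_Rsqr_abs. apply sqrt_le_1_alt.
  rewrite Rsqr_pow2. apply lsum_CS.
Qed.

Lemma lsum_wCS (t rho : A -> R) L : (forall x, In x L -> 0 < rho x) ->
  lsum t L ^ 2 <= lsum rho L * lsum (fun x => t x ^ 2 / rho x) L.
Proof.
  intros H.
  assert (Hsq : forall x, In x L -> sqrt (rho x) ^ 2 = rho x)
    by (intros x Hx; rewrite <- Rsqr_pow2; apply Rsqr_sqrt; left; auto).
  replace (lsum t L) with (lsum (fun x => sqrt (rho x) * (t x / sqrt (rho x))) L).
  2:{ apply lsum_ext. intros x Hx. specialize (H x Hx). field. apply Rgt_not_eq, sqrt_lt_R0; auto. }
  eapply Rle_trans; [apply lsum_CS|]. apply Req_le. f_equal; apply lsum_ext; intros x Hx.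
  - apply Hsq; auto.
  - unfold Rdiv. rewrite Rpow_mult_distr, pow_inv, Hsq; auto.
Qed.
End ListSums.

Lemma lsum_map {A B : Type} (f : B -> R) (g : A -> B) l :
  lsum f (map g l) = lsum (fun x => f (g x)) l.
Proof. induction l; simpl; [ring | rewrite IHl; ring]. Qed.

Lemma lsum_flat_map {A B : Type} (f : B -> R) (g : A -> list B) l :
  lsum f (flat_map g l) = lsum (fun x => lsum f (g x)) l.
Proof. induction l; simpl; [ring | rewrite lsum_app, IHl; ring]. Qed.

Lemma lsum_swap {A B : Type} (g : A -> B -> R) L M :
  lsum (fun x => lsum (g x) M) L = lsum (fun y => lsum (fun x => g x y) L) M.
Proof.
  induction L; simpl.
  - induction M; simpl; [ring | rewrite <- IHM; ring].
  - rewrite IHL, <- lsum_plus. reflexivity.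
Qed.

Lemma lsum_prod {A B : Type} (f : A -> R) (g : B -> R) L M :
  lsum (fun p => f (fst p) * g (snd p)) (list_prod L M) = lsum f L * lsum g M.
Proof.
  induction L; simpl; [ring|].
  rewrite lsum_app, IHL, lsum_map. simpl. rewrite lsum_scal. ring.
Qed.

Lemma NoDup_map_in {A B : Type} (f : A -> B) (l : list A) :
  NoDup l -> (forall x y, In x l -> In y l -> f x = f y -> x = y) -> NoDup (map f l).
Proof.
  induction l as [|a l IH]; intros HN Hi; simpl; constructor; inversion HN; subst.
  - intros Hin. apply in_map_iff in Hin as [y [Hy Hy']].
    assert (y = a) by (apply Hi; simpl; auto). subst; contradiction.
  - apply IH; auto. intros; apply Hi; simpl; auto.
Qed.

Lemma NoDup_flat_map_inv {A B : Type} (f : A -> list B) (g : B -> A) L :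
  NoDup L -> (forall x, In x L -> NoDup (f x)) ->
  (forall x p, In x L -> In p (f x) -> g p = x) -> NoDup (flat_map f L).
Proof.
  induction L as [|a L IH]; intros HN Hf Hg; simpl; [constructor|].
  inversion HN; subst. apply NoDup_app.
  - apply Hf; simpl; auto.
  - apply IH; auto; intros; [apply Hf | apply Hg]; simpl; auto.
  - intros p Hp1 Hp2. apply in_flat_map in Hp2 as [y [Hy Hp2]].
    assert (g p = a) by (apply Hg; simpl; auto). assert (g p = y) by (apply Hg; simpl; auto).
    subst. congruence.
Qed.

Definition jpow (y s : R) : R := Rpower (jbr y) s.

Lemma jbr_ge1 y : 1 <= jbr y.
Proof. unfold jbr. rewrite <- sqrt_1 at 1. apply sqrt_le_1_alt. nra. Qed.

Lemma jbr_pos y : 0 < jbr y.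
Proof. pose proof (jbr_ge1 y); lra. Qed.

Lemma jbr_sq y : jbr y * jbr y = 1 + y ^ 2.
Proof. unfold jbr. apply sqrt_sqrt. nra. Qed.

Lemma jbr_ge_abs y : Rabs y <= jbr y.
Proof. unfold jbr. rewrite <- sqrt_Rsqr_abs. apply sqrt_le_1_alt. unfold Rsqr. nra. Qed.

Lemma jbr_mono y z : Rabs y <= Rabs z -> jbr y <= jbr z.
Proof.
  intros H. unfold jbr. apply sqrt_le_1_alt.
  rewrite <- (pow2_abs y), <- (pow2_abs z). pose proof (Rabs_pos y). nra.
Qed.

Lemma Rpower_pos a s : 0 < Rpower a s.
Proof. apply exp_pos. Qed.

Lemma Rpower_zero a : Rpower a 0 = 1.
Proof. unfold Rpower. rewrite Rmult_0_l. apply exp_0. Qed.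

Lemma Rpower_neg_le s a b : 0 <= s -> 0 < a <= b -> Rpower b (- s) <= Rpower a (- s).
Proof.
  intros Hs Hab. rewrite !Rpower_Ropp.
  apply Rinv_le_contravar; [apply Rpower_pos | apply Rle_Rpower_l; auto].
Qed.

Lemma jpow_pos y s : 0 < jpow y s.
Proof. apply Rpower_pos. Qed.

Lemma jpow_0 y : jpow y 0 = 1.
Proof. apply Rpower_zero. Qed.

Lemma jpow_le1 y s : 0 <= s -> jpow y (- s) <= 1.
Proof.
  intros Hs. unfold jpow. rewrite <- (Rpower_zero (jbr y)).
  apply Rle_Rpower; [apply jbr_ge1 | lra].
Qed.

Lemma jpow_mono_neg y z s : 0 <= s -> Rabs y <= Rabs z -> jpow z (- s) <= jpow y (- s).
Proof. intros Hs H. apply Rpower_neg_le; auto. split; [apply jbr_pos | apply jbr_mono; auto]. Qed.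

Lemma jpow_mono_exp y s t : s <= t -> jpow y s <= jpow y t.
Proof. intros; apply Rle_Rpower; auto. apply jbr_ge1. Qed.

Lemma jpow_sq y b : jpow y (- b) ^ 2 = jpow y (- (2 * b)).
Proof. unfold jpow. simpl. rewrite Rmult_1_r, <- Rpower_plus. f_equal. ring. Qed.

Lemma ln_le_xm1 x : 0 < x -> ln x <= x - 1.
Proof.
  intros Hx. rewrite <- (ln_exp (x - 1)).
  destruct (Req_dec (x - 1) 0) as [E|E].
  - rewrite E, exp_0. replace x with 1 by lra. rewrite ln_1. lra.
  - left. apply ln_increasing; auto. pose proof (exp_ineq1 (x - 1) E). lra.
Qed.

(* Telescoping comparison n^-(q+1) <= ((n-1)^-q - n^-q)/q, the discrete analogue
   of integrating x^-(q+1). *)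
Lemma tele_step q n : 0 < q -> 1 < n ->
  Rpower n (- (q + 1)) <= (Rpower (n - 1) (- q) - Rpower n (- q)) / q.
Proof.
  intros Hq Hn.
  assert (E : Rpower (n - 1) (- q) = Rpower n (- q) * Rpower ((n - 1) / n) (- q)).
  { rewrite Rpower_mult_distr by (try apply Rdiv_lt_0_compat; lra). f_equal. field. lra. }
  assert (Hb : 1 + q / n <= Rpower ((n - 1) / n) (- q)).
  { unfold Rpower. eapply Rle_trans; [|apply exp_ineq1_le].
    assert (ln ((n - 1) / n) <= (n - 1) / n - 1)
      by (apply ln_le_xm1; apply Rdiv_lt_0_compat; lra).
    assert ((n - 1) / n - 1 = - (1 / n)) by (field; lra).
    assert (q / n = q * (1 / n)) by (field; lra).
    nra. }
  assert (E2 : Rpower n (- (q + 1)) = Rpower n (- q) * / n).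
  { replace (- (q + 1)) with (- q + - 1) by ring.
    rewrite Rpower_plus, Rpower_Ropp with (y := 1), Rpower_1 by lra. reflexivity. }
  rewrite E, E2. pose proof (Rpower_pos n (- q)).
  set (P := Rpower n (- q)) in *. set (Q := Rpower ((n - 1) / n) (- q)) in *.
  apply Rmult_le_reg_r with q; auto.
  replace ((P * Q - P) / q * q) with (P * Q - P) by (field; lra).
  assert (P * / n * q = P * (q / n)) by (unfold Rdiv; ring). nra.
Qed.

Lemma zeta_bound (s K : R) (M : nat) (h : nat -> R) : 1 < s -> 0 <= K ->
  (forall n, h n <= 1) -> (forall n, (2 <= n)%nat -> h n <= K * Rpower (INR n) (- s)) ->
  lsum h (seq 0 (M + 2)) <= 2 + K * (1 - Rpower (INR (M + 1)) (- (s - 1))) / (s - 1).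
Proof.
  intros Hs HK H1 H2. induction M.
  - replace (INR (0 + 1)) with 1 by (simpl; ring).
    unfold Rpower at 1. rewrite ln_1, Rmult_0_r, exp_0.
    simpl. pose proof (H1 0%nat); pose proof (H1 1%nat).
    replace (1 - 1) with 0 by ring. unfold Rdiv. rewrite Rmult_0_r, Rmult_0_l. lra.
  - replace (S M + 2)%nat with (S (M + 2)) by lia. rewrite seq_S, lsum_app. simpl lsum at 2.
    set (T1 := Rpower (INR (M + 1)) (- (s - 1))) in *.
    set (T2 := Rpower (INR (S M + 1)) (- (s - 1))).
    assert (h (M + 2)%nat <= K * ((T1 - T2) / (s - 1))).
    { eapply Rle_trans; [apply H2; lia|]. apply Rmult_le_compat_l; auto.
      unfold T1, T2.
      replace (INR (M + 1)) with (INR (M + 2) - 1) by (rewrite !plus_INR; simpl; ring).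
      replace (INR (S M + 1)) with (INR (M + 2)) by (f_equal; lia).
      replace (- s) with (- ((s - 1) + 1)) by ring. apply tele_step; [lra|].
      apply (lt_INR 1 (M + 2)). lia. }
    assert (K * (1 - T1) / (s - 1) + K * ((T1 - T2) / (s - 1)) = K * (1 - T2) / (s - 1))
      by (field; lra).
    simpl (0 + (M + 2))%nat. lra.
Qed.

Definition line_const (t s : R) : R := 2 * (2 + Rpower (Rabs t) (- s) / (s - 1)).

Lemma line_sum_nat (t s : R) : t <> 0 -> 1 < s -> forall l : list nat, NoDup l ->
  lsum (fun n => jpow (Rabs t * INR n) (- s)) l <= 2 + Rpower (Rabs t) (- s) / (s - 1).
Proof.
  intros Ht Hs l Hl. set (K := Rpower (Rabs t) (- s)).
  assert (HK : 0 < K) by apply Rpower_pos.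
  assert (Hat : 0 < Rabs t) by (apply Rabs_pos_lt; auto).
  set (h := fun n => jpow (Rabs t * INR n) (- s)).
  assert (H2 : forall n, (2 <= n)%nat -> h n <= K * Rpower (INR n) (- s)).
  { intros n Hn. unfold h, jpow, K.
    assert (0 < INR n) by (apply lt_0_INR; lia).
    rewrite Rpower_mult_distr by auto. apply Rpower_neg_le; [lra|].
    split; [apply Rmult_lt_0_compat; auto|].
    eapply Rle_trans; [|apply jbr_ge_abs].
    rewrite Rabs_mult, Rabs_Rabsolu, (Rabs_right (INR n)) by lra. lra. }
  set (m := list_max l).
  eapply Rle_trans; [apply (lsum_incl_le h l (seq 0 (m + 2))); auto|].
  - intros n Hn. apply in_seq. split; [lia|].
    assert (n <= m)%nat; [|lia].
    pose proof (proj1 (list_max_le l m) (Nat.le_refl _)) as Hall.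
    rewrite Forall_forall in Hall. auto.
  - intros; left; apply jpow_pos.
  - eapply Rle_trans; [apply zeta_bound; eauto; [lra | intros; apply jpow_le1; lra]|].
    assert (0 < Rpower (INR (m + 1)) (- (s - 1))) by apply Rpower_pos.
    apply Rplus_le_compat_l. unfold Rdiv. apply Rmult_le_compat_r.
    + left; apply Rinv_0_lt_compat; lra.
    + nra.
Qed.

(* Splitting the integers at the point -c/t where t x + c changes sign reduces
   the bound to two sums over nonnegative integers. *)
Lemma line_sum (t s : R) : t <> 0 -> 1 < s -> forall (c : R) (L : list Z), NoDup L ->
  lsum (fun x => jpow (t * IZR x + c) (- s)) L <= line_const t s.
Proof.
  intros Ht Hs c L HL. unfold line_const.
  set (z := - c / t). set (z1 := up z). destruct (archimed z) as [Hz1 Hz2]. fold z1 in Hz1, Hz2.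
  assert (Hat : 0 < Rabs t) by (apply Rabs_pos_lt; auto).
  assert (Etc : forall x, Rabs (t * IZR x + c) = Rabs t * Rabs (IZR x - z))
    by (intros; rewrite <- Rabs_mult; f_equal; unfold z; field; auto).
  rewrite (lsum_split_filter _ (fun x => (z1 <=? x)%Z)).
  replace (2 * _) with ((2 + Rpower (Rabs t) (- s) / (s - 1))
                        + (2 + Rpower (Rabs t) (- s) / (s - 1))) by ring.
  apply Rplus_le_compat.
  - set (L1 := filter (fun x => (z1 <=? x)%Z) L).
    eapply Rle_trans; [|apply (line_sum_nat t s Ht Hs (map (fun x => Z.to_nat (x - z1)) L1))].
    + rewrite lsum_map. apply lsum_le. intros x Hx. apply filter_In in Hx as [_ Hx].
      apply Z.leb_le in Hx. apply jpow_mono_neg; [lra|].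
      rewrite Etc, Rabs_mult, Rabs_Rabsolu, INR_IZR_INZ, Z2Nat.id, minus_IZR by lia.
      apply IZR_le in Hx. rewrite (Rabs_right (_ - _)), (Rabs_right (_ - _)) by lra.
      apply Rmult_le_compat_l; lra.
    + apply NoDup_map_in; [apply NoDup_filter; auto|].
      intros x y Hx Hy E. apply filter_In in Hx as [_ Hx]. apply filter_In in Hy as [_ Hy].
      apply Z.leb_le in Hx. apply Z.leb_le in Hy. lia.
  - set (L1 := filter (fun x => negb (z1 <=? x)%Z) L).
    eapply Rle_trans;
      [|apply (line_sum_nat t s Ht Hs (map (fun x => Z.to_nat (z1 - 1 - x)) L1))].
    + rewrite lsum_map. apply lsum_le. intros x Hx. apply filter_In in Hx as [_ Hx].
      apply Bool.negb_true_iff, Z.leb_gt in Hx. apply jpow_mono_neg; [lra|].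
      rewrite Etc, Rabs_mult, Rabs_Rabsolu, INR_IZR_INZ, Z2Nat.id, !minus_IZR by lia.
      assert (IZR x <= IZR z1 - 1) by (rewrite <- minus_IZR; apply IZR_le; lia).
      rewrite (Rabs_left1 (IZR x - z)), (Rabs_right (_ - _ - _)) by lra.
      apply Rmult_le_compat_l; lra.
    + apply NoDup_map_in; [apply NoDup_filter; auto|].
      intros x y Hx Hy E. apply filter_In in Hx as [_ Hx]. apply filter_In in Hy as [_ Hy].
      apply Bool.negb_true_iff, Z.leb_gt in Hx. apply Bool.negb_true_iff, Z.leb_gt in Hy. lia.
Qed.

Lemma line_const_pos t s : 1 < s -> 0 < line_const t s.
Proof.
  intros Hs. unfold line_const. pose proof (Rpower_pos (Rabs t) (- s)).
  assert (0 < Rpower (Rabs t) (- s) / (s - 1)) by (apply Rdiv_lt_0_compat; lra). lra.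
Qed.

Lemma jbr_sum_le y z : Rabs z <= Rabs y -> jbr (y + z) <= 2 * jbr y.
Proof.
  intros H. pose proof (jbr_pos (y + z)). pose proof (jbr_pos y).
  apply Rsqr_incr_0_var; [|lra]. unfold Rsqr.
  replace (2 * jbr y * (2 * jbr y)) with (4 * (jbr y * jbr y)) by ring.
  rewrite !jbr_sq, <- (pow2_abs y), <- (pow2_abs (y + z)).
  pose proof (Rabs_triang y z). pose proof (Rabs_pos (y + z)). pose proof (Rabs_pos z). nra.
Qed.

Lemma peetre_one_sided y z s : 0 <= s -> Rabs z <= Rabs y ->
  jpow (y + z) s / (jpow y s * jpow z s) <= Rpower 2 s * jpow z (- s).
Proof.
  intros Hs H. unfold jpow.
  pose proof (jbr_pos y). pose proof (jbr_pos (y + z)).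
  pose proof (Rpower_pos (jbr y) s). pose proof (Rpower_pos (jbr z) s).
  assert (Hle : Rpower (jbr (y + z)) s <= Rpower 2 s * Rpower (jbr y) s).
  { rewrite Rpower_mult_distr by lra. apply Rle_Rpower_l; auto. split; [lra|].
    apply jbr_sum_le; auto. }
  rewrite Rpower_Ropp. apply Rmult_le_reg_r with (Rpower (jbr y) s * Rpower (jbr z) s); [nra|].
  unfold Rdiv. rewrite Rmult_assoc, Rinv_l by nra.
  replace (Rpower 2 s * / Rpower (jbr z) s * (Rpower (jbr y) s * Rpower (jbr z) s))
    with (Rpower 2 s * Rpower (jbr y) s) by (field; lra). lra.
Qed.

Lemma peetre_ratio y z s : 0 <= s ->
  jpow (y + z) s / (jpow y s * jpow z s) <= Rpower 2 s * (jpow y (- s) + jpow z (- s)).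
Proof.
  intros Hs. pose proof (Rpower_pos 2 s). pose proof (jpow_pos y (- s)). pose proof (jpow_pos z (- s)).
  destruct (Rle_dec (Rabs z) (Rabs y)) as [Hzy|Hzy].
  - pose proof (peetre_one_sided y z s Hs Hzy). nra.
  - rewrite Rplus_comm, Rmult_comm.
    pose proof (peetre_one_sided z y s Hs ltac:(lra)). nra.
Qed.

Lemma small_freq_bound X b : 0 <= b -> Rabs X < 1 -> 1 <= Rpower 3 (2 * b) * jpow X (- (2 * b)).
Proof.
  intros Hb HX.
  assert (Hj : jbr X <= 3).
  { pose proof (jbr_pos X). apply Rsqr_incr_0_var; [|lra]. unfold Rsqr. rewrite jbr_sq.
    rewrite <- (pow2_abs X). pose proof (Rabs_pos X). nra. }
  assert (Rpower 3 (- (2 * b)) <= jpow X (- (2 * b)))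
    by (apply Rpower_neg_le; [lra | split; [apply jbr_pos | exact Hj]]).
  replace 1 with (Rpower 3 (2 * b) * Rpower 3 (- (2 * b)))
    by (rewrite <- Rpower_plus, Rplus_opp_r; apply Rpower_zero).
  apply Rmult_le_compat_l; [left; apply Rpower_pos | assumption].
Qed.

(* When all three frequencies of A = X1 + X2 are >= 1, their product dominates X2^2/2. *)
Lemma large_freqs_bound A X1 X2 b : 0 <= b -> A = X1 + X2 ->
  1 <= Rabs A -> 1 <= Rabs X1 -> 1 <= Rabs X2 ->
  jpow (Rabs A * Rabs X1 * Rabs X2) (- b) <= Rpower 3 b * jpow X2 (- (2 * b)).
Proof.
  intros Hb EA H3 H1 H2.
  set (P := Rabs A * Rabs X1 * Rabs X2).
  assert (HP : Rabs X2 ^ 2 <= 2 * P).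
  { assert (Rabs X2 <= Rabs A + Rabs X1).
    { replace X2 with (A + - X1) by lra. rewrite <- (Rabs_Ropp X1). apply Rabs_triang. }
    assert (Rabs A + Rabs X1 <= 2 * (Rabs A * Rabs X1)) by nra.
    assert (Rabs X2 <= 2 * (Rabs A * Rabs X1)) by lra.
    unfold P. rewrite <- Rsqr_pow2. unfold Rsqr. nra. }
  assert (Hj : jbr X2 * jbr X2 / 3 <= jbr P).
  { pose proof (jbr_pos X2). pose proof (jbr_pos P).
    apply Rsqr_incr_0_var; [|lra]. unfold Rsqr.
    replace (jbr X2 * jbr X2 / 3 * (jbr X2 * jbr X2 / 3)) with ((jbr X2 * jbr X2) ^ 2 / 9)
      by (field; lra).
    rewrite !jbr_sq, <- (pow2_abs X2).
    assert (0 <= P) by (unfold P; apply Rmult_le_pos; [apply Rmult_le_pos|]; apply Rabs_pos).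
    set (x := Rabs X2 ^ 2) in *. assert (0 <= x) by (unfold x; apply pow2_ge_0).
    assert (x * x <= 4 * (P * P)) by nra.
    assert (0 <= (x - 1) * (x - 1)) by apply Rle_0_sqr.
    simpl. nra. }
  pose proof (jbr_pos X2).
  unfold jpow. eapply Rle_trans.
  - apply Rpower_neg_le with (a := jbr X2 * jbr X2 / 3); [lra | split; [|exact Hj]].
    apply Rdiv_lt_0_compat; nra.
  - assert (E3 : Rpower (/ 3) (- b) = Rpower 3 b)
      by (unfold Rpower; rewrite ln_Rinv by lra; f_equal; ring).
    unfold Rdiv. rewrite <- Rpower_mult_distr by (try apply Rinv_0_lt_compat; nra).
    rewrite <- Rpower_mult_distr, <- Rpower_plus, E3 by lra.
    replace (- b + - b) with (- (2 * b)) by ring. lra.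
Qed.

Lemma resonance_split (b A X1 X2 : R) : 0 <= b -> A = X1 + X2 ->
  jpow (Rabs A * Rabs X1 * Rabs X2) (- b) <=
    Rpower 3 (2 * b) * (jpow X1 (- (2 * b)) + jpow X2 (- (2 * b)) + jpow A (- (2 * b))).
Proof.
  intros Hb EA.
  pose proof (jpow_pos X1 (- (2 * b))). pose proof (jpow_pos X2 (- (2 * b))).
  pose proof (jpow_pos A (- (2 * b))). pose proof (Rpower_pos 3 (2 * b)).
  pose proof (jpow_le1 (Rabs A * Rabs X1 * Rabs X2) b Hb).
  destruct (Rlt_dec (Rabs X1) 1) as [S1|S1]; [pose proof (small_freq_bound X1 b Hb S1); nra|].
  destruct (Rlt_dec (Rabs X2) 1) as [S2|S2]; [pose proof (small_freq_bound X2 b Hb S2); nra|].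
  destruct (Rlt_dec (Rabs A) 1) as [S3|S3]; [pose proof (small_freq_bound A b Hb S3); nra|].
  pose proof (large_freqs_bound A X1 X2 b Hb EA ltac:(lra) ltac:(lra) ltac:(lra)).
  assert (Rpower 3 b <= Rpower 3 (2 * b)) by (apply Rle_Rpower; lra).
  nra.
Qed.

Definition zrange (rad : nat) : list Z :=
  map (fun i => (Z.of_nat i - Z.of_nat rad)%Z) (seq 0 (2 * rad + 1)).

Lemma zrange_In rad x : In x (zrange rad) <-> (- Z.of_nat rad <= x <= Z.of_nat rad)%Z.
Proof.
  unfold zrange. rewrite in_map_iff. split.
  - intros [i [<- Hi]]. apply in_seq in Hi. lia.
  - intros H. exists (Z.to_nat (x + Z.of_nat rad)). split; [lia | apply in_seq; lia].
Qed.

Lemma zrange_NoDup rad : NoDup (zrange rad).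
Proof. apply NoDup_map_in; [apply seq_NoDup | intros; lia]. Qed.

Fixpoint box (n rad : nat) : list (list Z) :=
  match n with
  | O => [[]]
  | S n' => flat_map (fun x => map (cons x) (box n' rad)) (zrange rad)
  end.

Lemma box_In n rad k : In k (box n rad) <->
  length k = n /\ Forall (fun z => (- Z.of_nat rad <= z <= Z.of_nat rad)%Z) k.
Proof.
  revert k. induction n; intros k; simpl.
  - split; [intros [<-|[]]; auto | intros [H _]; destruct k; [auto | discriminate]].
  - rewrite in_flat_map. split.
    + intros [x [Hx Hk]]. apply in_map_iff in Hk as [r [<- Hr]]. apply IHn in Hr as [Hl Hf].
      simpl. split; auto. constructor; auto. apply zrange_In; auto.
    + intros [Hl Hf]. destruct k as [|x r]; [discriminate|]. inversion Hf; subst.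
      exists x. split; [apply zrange_In; auto|]. apply in_map, IHn. split; auto.
Qed.

Lemma box_NoDup n rad : NoDup (box n rad).
Proof.
  induction n; simpl; [constructor; [intros [] | constructor]|].
  apply NoDup_flat_map_inv with (g := fun k => hd 0%Z k); [apply zrange_NoDup| |].
  - intros x _. apply NoDup_map_in; auto. intros a b _ _ E; injection E; auto.
  - intros x p _ Hp. apply in_map_iff in Hp as [r [<- _]]. reflexivity.
Qed.

Lemma box_nth_bound m rad k j : In k (box m rad) -> (j < m)%nat ->
  (- Z.of_nat rad <= nth j k 0%Z <= Z.of_nat rad)%Z.
Proof.
  intros Hk Hj. apply box_In in Hk as [Hl Hf]. rewrite Forall_forall in Hf.
  apply Hf, nth_In. lia.
Qed.

Lemma box_cover n (F : list (list Z)) : (forall k, In k F -> length k = n) ->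
  exists rad, incl F (box n rad).
Proof.
  induction F as [|k F IH]; intros H; [exists 0%nat; intros x []|].
  destruct IH as [rad HR]; [intros; apply H; simpl; auto|].
  set (rad1 := list_max (map Z.to_nat (map Z.abs k))).
  exists (Nat.max rad rad1). intros x [<-|Hx].
  - apply box_In. split; [apply H; simpl; auto|]. apply Forall_forall. intros z Hz.
    assert (Z.to_nat (Z.abs z) <= rad1)%nat; [|lia].
    pose proof (proj1 (list_max_le (map Z.to_nat (map Z.abs k)) rad1) (Nat.le_refl _)) as HF.
    rewrite Forall_forall in HF. apply HF, in_map, in_map. auto.
  - apply HR in Hx. apply box_In in Hx as [Hl Hf]. apply box_In. split; auto.
    eapply Forall_impl; [|exact Hf]. intros z Hz. simpl in Hz. lia.
Qed.

Lemma lsum_box_S (g : list Z -> R) n rad :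
  lsum g (box (S n) rad) = lsum (fun x => lsum (fun s => g (x :: s)) (box n rad)) (zrange rad).
Proof. simpl box. rewrite lsum_flat_map. apply lsum_ext. intros. apply lsum_map. Qed.

Definition coord_prod (n : nat) (F : nat -> Z -> R) (k : list Z) : R :=
  fold_right (fun j acc => F j (nth j k 0%Z) * acc) 1 (seq 0 n).

Lemma fold_map_S (f : nat -> R -> R) a l :
  fold_right f a (map S l) = fold_right (fun j => f (S j)) a l.
Proof. induction l; simpl; auto. rewrite IHl; auto. Qed.

Lemma coord_prod_S n F x r :
  coord_prod (S n) F (x :: r) = F 0%nat x * coord_prod n (fun j => F (S j)) r.
Proof.
  unfold coord_prod. rewrite <- cons_seq, <- seq_shift. simpl. rewrite fold_map_S. reflexivity.
Qed.

Lemma coord_prod_ext n F G a b :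
  (forall j, (j < n)%nat -> F j (nth j a 0%Z) = G j (nth j b 0%Z)) ->
  coord_prod n F a = coord_prod n G b.
Proof.
  intros H. unfold coord_prod.
  assert (Hs : forall j, In j (seq 0 n) -> (j < n)%nat) by (intros j Hj; apply in_seq in Hj; lia).
  induction (seq 0 n); simpl; auto. rewrite H, IHl; auto; intros; apply Hs; simpl; auto.
Qed.

Lemma coord_prod_pos n F k : (forall j z, 0 < F j z) -> 0 < coord_prod n F k.
Proof.
  intros H. unfold coord_prod. induction (seq 0 n); simpl; [lra|].
  apply Rmult_lt_0_compat; auto.
Qed.

Lemma coord_prod_nonneg n F k : (forall j z, 0 <= F j z) -> 0 <= coord_prod n F k.
Proof.
  intros H. unfold coord_prod. induction (seq 0 n); simpl; [lra|].
  apply Rmult_le_pos; auto.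
Qed.

Lemma coord_prod_mult n F G k :
  coord_prod n (fun j z => F j z * G j z) k = coord_prod n F k * coord_prod n G k.
Proof. unfold coord_prod. induction (seq 0 n); simpl; [ring | rewrite IHl; ring]. Qed.

Lemma coord_prod_inv n F k : (forall j z, 0 < F j z) ->
  coord_prod n (fun j z => / F j z) k = / coord_prod n F k.
Proof.
  intros H. assert (Hp := coord_prod_pos n F k H). unfold coord_prod in *.
  induction (seq 0 n); simpl in *; [field|].
  assert (0 < F a (nth a k 0%Z)) by auto.
  assert (0 < fold_right (fun j acc => F j (nth j k 0%Z) * acc) 1 l)
    by (clear IHl Hp; induction l; simpl; [lra | apply Rmult_lt_0_compat; auto]).
  rewrite IHl by auto. field. lra.
Qed.

Lemma box_coord_prod_le n rad F (c : nat -> R) :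
  (forall j z, 0 <= F j z) -> (forall j, (j < n)%nat -> lsum (F j) (zrange rad) <= c j) ->
  lsum (coord_prod n F) (box n rad) <= fold_right (fun j acc => c j * acc) 1 (seq 0 n).
Proof.
  revert F c. induction n as [|n IH]; intros F c HF Hc; [simpl; unfold coord_prod; simpl; lra|].
  rewrite lsum_box_S, <- cons_seq, <- seq_shift. simpl fold_right. rewrite fold_map_S.
  assert (HP : forall s, 0 <= coord_prod n (fun j => F (S j)) s)
    by (intros; apply coord_prod_nonneg; auto).
  assert (HI := IH (fun j => F (S j)) (fun j => c (S j)) (fun j => HF (S j))
                  (fun j Hj => Hc (S j) ltac:(lia))).
  assert (H0 := Hc 0%nat ltac:(lia)).
  assert (0 <= lsum (F 0%nat) (zrange rad)) by (apply lsum_nonneg; auto).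
  assert (0 <= lsum (coord_prod n (fun j => F (S j))) (box n rad)) by (apply lsum_nonneg; auto).
  rewrite (lsum_ext _ (fun x => F 0%nat x * lsum (coord_prod n (fun j => F (S j))) (box n rad))).
  - rewrite (lsum_ext _ (fun x => lsum (coord_prod n (fun j => F (S j))) (box n rad) * F 0%nat x))
      by (intros; ring).
    rewrite lsum_scal. rewrite Rmult_comm. apply Rmult_le_compat; auto.
  - intros x _. rewrite <- lsum_scal. apply lsum_ext. intros s _. apply coord_prod_S.
Qed.

Lemma vsub_length n k k' : length (vsub n k k') = n.
Proof. unfold vsub. rewrite length_map, length_seq. auto. Qed.

Lemma nth_map_seq {A : Type} (f : nat -> A) n j d : (j < n)%nat ->
  nth j (map f (seq 0 n)) d = f j.
Proof.
  intros. rewrite (nth_indep (map f (seq 0 n)) d (f 0%nat)) by (rewrite length_map, length_seq; auto).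
  rewrite map_nth, seq_nth; auto.
Qed.

Lemma vsub_nth n k k' j : (j < n)%nat -> nth j (vsub n k k') 0%Z = (nth j k 0 - nth j k' 0)%Z.
Proof. intros Hj. unfold vsub. rewrite nth_map_seq; auto. Qed.

Lemma vsub_S n x r y s : vsub (S n) (x :: r) (y :: s) = (x - y)%Z :: vsub n r s.
Proof. unfold vsub. rewrite <- cons_seq, <- seq_shift. simpl. rewrite map_map. reflexivity. Qed.

Lemma list_eq_nth n (a b : list Z) : length a = n -> length b = n ->
  (forall j, (j < n)%nat -> nth j a 0%Z = nth j b 0%Z) -> a = b.
Proof. intros Ha Hb H. apply nth_ext with 0%Z 0%Z; [congruence | intros j Hj; apply H; lia]. Qed.

Lemma vsub_inj_r n k a b : length a = n -> length b = n -> vsub n k a = vsub n k b -> a = b.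
Proof.
  intros Ha Hb E. apply (list_eq_nth n); auto. intros j Hj.
  assert (nth j (vsub n k a) 0%Z = nth j (vsub n k b) 0%Z) as Ej by (rewrite E; auto).
  rewrite !vsub_nth in Ej by auto. lia.
Qed.

Lemma vsub_inj_l n k a b : length a = n -> length b = n -> vsub n a k = vsub n b k -> a = b.
Proof.
  intros Ha Hb E. apply (list_eq_nth n); auto. intros j Hj.
  assert (nth j (vsub n a k) 0%Z = nth j (vsub n b k) 0%Z) as Ej by (rewrite E; auto).
  rewrite !vsub_nth in Ej by auto. lia.
Qed.

Definition vadd (n : nat) (k k' : list Z) : list Z :=
  map (fun j => (nth j k 0 + nth j k' 0)%Z) (seq 0 n).

Lemma vadd_vsub n k k' : length k = n -> vadd n (vsub n k k') k' = k.
Proof.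
  intros Hk. apply (list_eq_nth n); auto; unfold vadd; [rewrite length_map, length_seq; auto|].
  intros j Hj. rewrite nth_map_seq, vsub_nth by auto. lia.
Qed.

Lemma vsub_nonzero n k k' : length k = n -> length k' = n -> k' <> k ->
  InDotZN n (vsub n k k').
Proof.
  intros Hk Hk' Hne. split; [apply vsub_length|].
  apply Classical_Prop.NNPP. intros H. apply Hne, (list_eq_nth n); auto. intros j Hj.
  destruct (Z.eq_dec (nth j (vsub n k k') 0%Z) 0%Z) as [E|E].
  - rewrite vsub_nth in E by auto. lia.
  - exfalso; apply H; eauto.
Qed.

Lemma vsub_in_box m ra rb r s : In r (box m ra) -> In s (box m rb) ->
  In (vsub m r s) (box m (ra + rb)).
Proof.
  intros Hr Hs. apply box_In. split; [apply vsub_length|]. apply Forall_forall. intros z Hz.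
  apply In_nth with (d := 0%Z) in Hz as [j [Hj Hz]]. rewrite vsub_length in Hj.
  rewrite <- Hz, vsub_nth by auto.
  pose proof (box_nth_bound m ra r j Hr Hj). pose proof (box_nth_bound m rb s j Hs Hj). lia.
Qed.

Lemma adot_S n alpha x r :
  adot (S n) alpha (x :: r) = alpha 0%nat * IZR x + adot n (fun j => alpha (S j)) r.
Proof. unfold adot. rewrite <- cons_seq, <- seq_shift. simpl. rewrite fold_map_S. reflexivity. Qed.

Lemma adot_vsub N alpha k k' : adot N alpha (vsub N k k') = adot N alpha k - adot N alpha k'.
Proof.
  unfold adot. assert (Hs : forall j, In j (seq 0 N) -> (j < N)%nat)
    by (intros j Hj; apply in_seq in Hj; lia).
  induction (seq 0 N); simpl; [ring|].
  rewrite IHl by (intros; apply Hs; simpl; auto).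
  rewrite vsub_nth, minus_IZR by (apply Hs; simpl; auto). ring.
Qed.

(* Non-resonance forces alpha_1 <> 0 (test it on the first unit vector). *)
Lemma alpha0_nonzero n alpha : NonResonant (S n) alpha -> alpha 0%nat <> 0.
Proof.
  intros H E. apply (H (1%Z :: repeat 0%Z n)).
  - split; [simpl; rewrite repeat_length; auto|]. exists 0%nat. split; [lia | simpl; lia].
  - rewrite adot_S, E.
    replace (adot n (fun j => alpha (S j)) (repeat 0%Z n)) with 0; [ring|].
    unfold adot. induction (seq 0 n) as [|a l IH]; simpl; [auto|]. rewrite <- IH.
    destruct (Nat.lt_ge_cases a n).
    + rewrite nth_repeat. ring.
    + rewrite nth_overflow by (rewrite repeat_length; lia). ring.
Qed.

(* Partial sums indexed by finite subsets that are bounded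
   above have a supremum, which is the unconditional sum of a nonnegative family;
   an absolutely dominated real family is the difference of two such families. *)
Definition ldec : forall x y : list Z, {x = y} + {x <> y} := list_eq_dec Z.eq_dec.

Lemma FinSub_nil D : FinSub D [].
Proof. split; [constructor | intros _ []]. Qed.

Lemma FinSub_union D F1 F2 : FinSub D F1 -> FinSub D F2 ->
  FinSub D (nodup ldec (F1 ++ F2)) /\
  incl F1 (nodup ldec (F1 ++ F2)) /\ incl F2 (nodup ldec (F1 ++ F2)).
Proof.
  intros [_ H1] [_ H2]. split; [split|split].
  - apply NoDup_nodup.
  - intros x Hx. apply nodup_In in Hx. apply in_app_or in Hx as [|]; auto.
  - intros x Hx. apply nodup_In, in_or_app; auto.
  - intros x Hx. apply nodup_In, in_or_app; auto.
Qed.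

Lemma nonneg_sum_exists (D : list Z -> Prop) (f : list Z -> R) (M : R) :
  (forall x, D x -> 0 <= f x) -> (forall F, FinSub D F -> lsum f F <= M) ->
  exists s, RHasSum D f s.
Proof.
  intros Hp Hb.
  set (E := fun y => exists F, FinSub D F /\ y = lsum f F).
  assert (HE : bound E) by (exists M; intros y [F [HF ->]]; auto).
  assert (HE0 : exists y, E y) by (exists 0; exists []; split; [apply FinSub_nil | reflexivity]).
  destruct (completeness E HE HE0) as [s [Hs1 Hs2]].
  exists s. intros eps Heps.
  destruct (Classical_Prop.classic (exists F0, FinSub D F0 /\ s - eps < lsum f F0))
    as [[F0 [HF0 Hlt]]|Hn].
  - exists F0. split; auto. intros F HF Hi.
    assert (lsum f F0 <= lsum f F)
      by (apply lsum_incl_le; auto; [apply HF0 | intros x Hx; apply Hp, HF; auto]).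
    assert (lsum f F <= s) by (apply Hs1; exists F; auto).
    apply Rabs_def1; lra.
  - exfalso. assert (s <= s - eps); [|lra]. apply Hs2. intros y [F [HF ->]].
    apply Rnot_lt_le. intros Hlt. apply Hn. exists F; auto.
Qed.

Lemma signed_sum_exists (D : list Z -> Prop) (f g : list Z -> R) (M : R) :
  (forall x, D x -> Rabs (f x) <= g x) -> (forall F, FinSub D F -> lsum g F <= M) ->
  exists s, RHasSum D f s.
Proof.
  intros Hfg Hb.
  set (fp := fun x => (Rabs (f x) + f x) / 2). set (fm := fun x => (Rabs (f x) - f x) / 2).
  assert (Hpm : forall x, D x -> 0 <= fp x <= g x /\ 0 <= fm x <= g x).
  { intros x Hx. specialize (Hfg x Hx). unfold fp, fm.
    pose proof (Rle_abs (f x)). pose proof (Rle_abs (- f x)). rewrite Rabs_Ropp in *. lra. }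
  assert (Hbound : forall h, (forall x, D x -> 0 <= h x <= g x) ->
                     forall F, FinSub D F -> lsum h F <= M).
  { intros h Hh F HF. eapply Rle_trans; [|apply Hb; eauto].
    apply lsum_le. intros x Hx. apply Hh, HF; auto. }
  destruct (nonneg_sum_exists D fp M) as [s1 Hs1]; [apply Hpm | apply Hbound, Hpm|].
  destruct (nonneg_sum_exists D fm M) as [s2 Hs2]; [apply Hpm | apply Hbound, Hpm|].
  exists (s1 - s2). intros eps Heps.
  destruct (Hs1 (eps / 2)) as [F1 [HF1 H1]]; [lra|].
  destruct (Hs2 (eps / 2)) as [F2 [HF2 H2]]; [lra|].
  destruct (FinSub_union D F1 F2 HF1 HF2) as [HU [Hi1 Hi2]].
  exists (nodup ldec (F1 ++ F2)). split; auto. intros F HF Hi.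
  replace (lsum f F) with (lsum fp F - lsum fm F)
    by (rewrite <- lsum_minus; apply lsum_ext; intros; unfold fp, fm; field).
  specialize (H1 F HF (incl_tran Hi1 Hi)). specialize (H2 F HF (incl_tran Hi2 Hi)).
  apply Rabs_def2 in H1. apply Rabs_def2 in H2. apply Rabs_def1; lra.
Qed.

Lemma RHasSum_approx D f s eps : RHasSum D f s -> 0 < eps ->
  exists F, FinSub D F /\ Rabs (lsum f F - s) < eps.
Proof.
  intros H He. destruct (H eps He) as [F0 [HF0 H0]].
  exists F0. split; auto. apply H0; auto. apply incl_refl.
Qed.

Lemma RHasSum_nonneg D f s : RHasSum D f s -> (forall x, D x -> 0 <= f x) -> 0 <= s.
Proof.
  intros H Hp. apply Rnot_lt_le. intros Hs.
  destruct (RHasSum_approx D f s (- s) H) as [F [HF HA]]; [lra|].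
  assert (0 <= lsum f F) by (apply lsum_nonneg; intros; apply Hp, HF; auto).
  apply Rabs_def2 in HA. lra.
Qed.

Lemma CHasSum_approx D f s eps : CHasSum D f s -> 0 < eps ->
  exists F, FinSub D F /\ Rabs (lsum (fun x => fst (f x)) F - fst s) < eps /\
                          Rabs (lsum (fun x => snd (f x)) F - snd s) < eps.
Proof.
  intros [H1 H2] He. destruct (H1 eps He) as [F1 [HF1 G1]]. destruct (H2 eps He) as [F2 [HF2 G2]].
  destruct (FinSub_union D F1 F2 HF1 HF2) as [HU [Hi1 Hi2]].
  exists (nodup ldec (F1 ++ F2)). split; [auto | split; [apply G1 | apply G2]; auto].
Qed.

Lemma Cmod_nonneg z : 0 <= Cmod z.
Proof. apply sqrt_pos. Qed.

Lemma Cmod_mul z w : Cmod (Cmul z w) = Cmod z * Cmod w.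
Proof. unfold Cmod, Cmul. simpl. rewrite <- sqrt_mult by nra. f_equal. ring. Qed.

Lemma Cmod_fst z : Rabs (fst z) <= Cmod z.
Proof. unfold Cmod. rewrite <- sqrt_Rsqr_abs. apply sqrt_le_1_alt. unfold Rsqr. nra. Qed.

Lemma Cmod_snd z : Rabs (snd z) <= Cmod z.
Proof. unfold Cmod. rewrite <- sqrt_Rsqr_abs. apply sqrt_le_1_alt. unfold Rsqr. nra. Qed.

Lemma sqrt_le_of_sq x y : 0 <= y -> x <= y * y -> sqrt x <= y.
Proof. intros Hy H. rewrite <- (sqrt_square y) by auto. apply sqrt_le_1_alt. auto. Qed.

Lemma Cmod_triangle a b c d :
  sqrt ((a + c) ^ 2 + (b + d) ^ 2) <= sqrt (a ^ 2 + b ^ 2) + sqrt (c ^ 2 + d ^ 2).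
Proof.
  assert (H1 := sqrt_pos (a ^ 2 + b ^ 2)). assert (H2 := sqrt_pos (c ^ 2 + d ^ 2)).
  apply sqrt_le_of_sq; [lra|].
  assert (E1 : sqrt (a ^ 2 + b ^ 2) * sqrt (a ^ 2 + b ^ 2) = a ^ 2 + b ^ 2) by (apply sqrt_sqrt; nra).
  assert (E2 : sqrt (c ^ 2 + d ^ 2) * sqrt (c ^ 2 + d ^ 2) = c ^ 2 + d ^ 2) by (apply sqrt_sqrt; nra).
  assert (a * c + b * d <= sqrt (a ^ 2 + b ^ 2) * sqrt (c ^ 2 + d ^ 2)).
  { rewrite <- sqrt_mult by nra. eapply Rle_trans; [apply Rle_abs|].
    rewrite <- sqrt_Rsqr_abs. apply sqrt_le_1_alt. unfold Rsqr.
    assert (0 <= (a * d - b * c) ^ 2) by apply pow2_ge_0. nra. }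
  nra.
Qed.

Definition Clsum (f : list Z -> Cpx) (F : list (list Z)) : Cpx :=
  (lsum (fun x => fst (f x)) F, lsum (fun x => snd (f x)) F).

Lemma Cmod_lsum f F : Cmod (Clsum f F) <= lsum (fun x => Cmod (f x)) F.
Proof.
  induction F as [|a F IH].
  - unfold Clsum, Cmod. simpl. replace (0 * (0 * 1) + 0 * (0 * 1)) with 0 by ring.
    rewrite sqrt_0. lra.
  - unfold Clsum in *. simpl lsum. eapply Rle_trans; [|apply Rplus_le_compat_l; exact IH].
    unfold Cmod at 1 3. simpl fst. simpl snd. apply Cmod_triangle.
Qed.

Lemma Cmod_approx (s z : Cpx) e : Rabs (fst z - fst s) < e -> Rabs (snd z - snd s) < e ->
  Cmod s <= Cmod z + 2 * e.
Proof.
  intros H1 H2. destruct s as [s1 s2]; destruct z as [z1 z2]. simpl in *.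
  unfold Cmod; simpl fst; simpl snd.
  replace s1 with (z1 + (s1 - z1)) by ring. replace s2 with (z2 + (s2 - z2)) by ring.
  eapply Rle_trans; [apply Cmod_triangle | apply Rplus_le_compat_l].
  assert (He : 0 <= e) by (pose proof (Rabs_pos (z1 - s1)); lra).
  apply sqrt_le_of_sq; [lra|].
  rewrite <- (pow2_abs (s1 - z1)), <- (pow2_abs (s2 - z2)).
  rewrite Rabs_minus_sym in H1, H2.
  pose proof (Rabs_pos (s1 - z1)). pose proof (Rabs_pos (s2 - z2)). simpl. nra.
Qed.

Definition wt (N : nat) (sigma : nat -> R) (k : list Z) : R :=
  coord_prod N (fun j z => jpow (IZR z) (2 * sigma j)) k.

Lemma Gweight_wt N alpha sigma k : Gweight N alpha sigma 0 k = wt N sigma k.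
Proof. unfold Gweight. rewrite Rmult_0_r, Rpower_zero, Rmult_1_l. reflexivity. Qed.

Lemma wt_pos N sigma k : 0 < wt N sigma k.
Proof. apply coord_prod_pos. intros; apply jpow_pos. Qed.

Lemma wt_ge1 N sigma k : (forall j, (j < N)%nat -> 0 <= sigma j) -> 1 <= wt N sigma k.
Proof.
  intros H. unfold wt, coord_prod.
  assert (Hs : forall j, In j (seq 0 N) -> 0 <= sigma j)
    by (intros j Hj; apply in_seq in Hj; apply H; lia).
  clear H. induction (seq 0 N) as [|a l IH]; simpl; [lra|].
  assert (1 <= jpow (IZR (nth a k 0%Z)) (2 * sigma a)).
  { rewrite <- (jpow_0 (IZR (nth a k 0%Z))). apply jpow_mono_exp.
    assert (0 <= sigma a) by (apply Hs; simpl; auto). lra. }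
  assert (1 <= fold_right (fun j acc => jpow (IZR (nth j k 0%Z)) (2 * sigma j) * acc) 1 l)
    by (apply IH; intros; apply Hs; simpl; auto).
  nra.
Qed.

Lemma wt_S n sigma x r : sigma 0%nat = 0 -> wt (S n) sigma (x :: r) = wt n (fun j => sigma (S j)) r.
Proof. intros H0. unfold wt. rewrite coord_prod_S, H0, Rmult_0_r, jpow_0, Rmult_1_l. reflexivity. Qed.

Lemma sqnorm_wt N alpha sigma (u : list Z -> Cpx) A :
  SqNormLe N alpha sigma 0 (fun k => Cmod (u k)) A ->
  forall L, FinSub (InDotZN N) L -> lsum (fun y => wt N sigma y * Cmod (u y) ^ 2) L <= A.
Proof.
  intros H L HL. rewrite <- (lsum_ext (fun k => Gweight N alpha sigma 0 k * Cmod (u k) ^ 2)).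
  - apply H; auto.
  - intros; rewrite Gweight_wt; auto.
Qed.

Lemma sqnorm_nonneg N alpha sigma g A : SqNormLe N alpha sigma 0 g A -> 0 <= A.
Proof. intros H. specialize (H [] (FinSub_nil _)). simpl in H. lra. Qed.

Definition wratio (N : nat) (sigma : nat -> R) (k k' : list Z) : R :=
  wt N sigma k / (wt N sigma (vsub N k k') * wt N sigma k').

Lemma wratio_pos N sigma k k' : 0 < wratio N sigma k k'.
Proof. apply Rdiv_lt_0_compat; [|apply Rmult_lt_0_compat]; apply wt_pos. Qed.

Lemma wratio_S n sigma k0 r x s : sigma 0%nat = 0 ->
  wratio (S n) sigma (k0 :: r) (x :: s) = wratio n (fun j => sigma (S j)) r s.
Proof. intros H0. unfold wratio. rewrite vsub_S, !wt_S by auto. reflexivity. Qed.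

Lemma wratio_coord_prod N sigma k k' : length k = N ->
  wratio N sigma k k' =
  coord_prod N (fun j z => jpow (IZR (nth j k 0%Z)) (2 * sigma j) /
                           (jpow (IZR (nth j k 0%Z) - IZR z) (2 * sigma j) * jpow (IZR z) (2 * sigma j))) k'.
Proof.
  intros Hk. unfold wratio, Rdiv.
  rewrite coord_prod_mult, coord_prod_inv, coord_prod_mult
    by (intros; apply Rmult_lt_0_compat; apply jpow_pos).
  f_equal. f_equal. f_equal. unfold wt. apply coord_prod_ext. intros j Hj.
  rewrite vsub_nth, minus_IZR; auto.
Qed.

(* For min sigma_j > 1/2 the Schur sums are bounded uniformly in k: each coordinate
   factor is bounded by Peetre's splitting and the one-dimensional sum of <x>^-2sigma_j. *)
Lemma wratio_box_bound N sigma : (forall j, (j < N)%nat -> sigma j > 1/2) ->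
  exists Cm, 0 <= Cm /\ forall k rad, length k = N -> lsum (wratio N sigma k) (box N rad) <= Cm.
Proof.
  intros Hs.
  set (c := fun j => Rpower 2 (2 * sigma j) *
                     (line_const (-1) (2 * sigma j) + line_const 1 (2 * sigma j))).
  exists (Rmax 0 (fold_right (fun j acc => c j * acc) 1 (seq 0 N))).
  split; [apply Rmax_l|]. intros k rad Hk. eapply Rle_trans; [|apply Rmax_r].
  rewrite (lsum_ext _ _ _ (fun k' _ => wratio_coord_prod N sigma k k' Hk)).
  apply box_coord_prod_le.
  - intros j z. apply Rlt_le, Rdiv_lt_0_compat; [|apply Rmult_lt_0_compat]; apply jpow_pos.
  - intros j Hj. specialize (Hs j Hj). set (a := IZR (nth j k 0%Z)). unfold c.
    eapply Rle_trans.
    + apply lsum_le with (g := fun z => Rpower 2 (2 * sigma j) *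
          (jpow (-1 * IZR z + a) (- (2 * sigma j)) + jpow (1 * IZR z + 0) (- (2 * sigma j)))).
      intros z _. pose proof (peetre_ratio (a - IZR z) (IZR z) (2 * sigma j) ltac:(lra)) as HP.
      replace (a - IZR z + IZR z) with a in HP by ring.
      replace (-1 * IZR z + a) with (a - IZR z) by ring. replace (1 * IZR z + 0) with (IZR z) by ring.
      exact HP.
    + rewrite lsum_scal, lsum_plus. apply Rmult_le_compat_l; [left; apply Rpower_pos|].
      apply Rplus_le_compat; apply line_sum; try lra; apply zrange_NoDup.
Qed.

Definition KernelBound (N : nat) (sigma : nat -> R) (T : list Z -> list Z -> R) (C : R) : Prop :=
  forall F G, FinSub (InDotZN N) F -> (forall k, In k F -> FinSub (ConvDom N k) (G k)) ->
    lsum (fun k => wt N sigma k * lsum (T k) (G k) ^ 2) F <= C.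

(* sum_k sum_{k' in G k} P(k-k') Q(k') <= A B when all finite sums of P and Q are
   bounded by A and B: the map (k,k') |-> (k-k', k') is injective. *)
Lemma conv_pair_bound N (P Q : list Z -> R) (A B : R) (F : list (list Z))
    (G : list Z -> list (list Z)) :
  (forall y, 0 <= P y) -> (forall y, 0 <= Q y) ->
  (forall L, FinSub (InDotZN N) L -> lsum P L <= A) ->
  (forall L, FinSub (InDotZN N) L -> lsum Q L <= B) ->
  FinSub (InDotZN N) F -> (forall k, In k F -> FinSub (ConvDom N k) (G k)) ->
  lsum (fun k => lsum (fun k' => P (vsub N k k') * Q k') (G k)) F <= A * B.
Proof.
  intros HP HQ HA HB [HFN HFD] HG.
  set (Pairs := flat_map (fun k => map (fun k' => (vsub N k k', k')) (G k)) F).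
  replace (lsum _ F) with (lsum (fun p => P (fst p) * Q (snd p)) Pairs)
    by (unfold Pairs; rewrite lsum_flat_map; apply lsum_ext; intros; apply lsum_map).
  assert (HPN : NoDup Pairs).
  { apply NoDup_flat_map_inv with (g := fun p => vadd N (fst p) (snd p)); auto.
    - intros k Hk. apply NoDup_map_in; [apply (HG k Hk)|]. intros a b _ _ E. injection E; auto.
    - intros k p Hk Hp. apply in_map_iff in Hp as [k' [<- _]]. apply vadd_vsub, HFD; auto. }
  assert (HPD : forall p, In p Pairs -> InDotZN N (fst p) /\ InDotZN N (snd p)).
  { intros p Hp. apply in_flat_map in Hp as [k [Hk Hp]]. apply in_map_iff in Hp as [k' [<- Hk']].
    destruct (proj2 (HG k Hk) k' Hk') as [Hk'1 Hk'2]. split; auto.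
    apply vsub_nonzero; auto; [apply HFD; auto | apply Hk'1]. }
  set (La := nodup ldec (map fst Pairs)). set (Lb := nodup ldec (map snd Pairs)).
  assert (HLa : FinSub (InDotZN N) La).
  { split; [apply NoDup_nodup|]. intros a Ha.
    apply nodup_In, in_map_iff in Ha as [p [<- Hp]]. apply HPD; auto. }
  assert (HLb : FinSub (InDotZN N) Lb).
  { split; [apply NoDup_nodup|]. intros a Ha.
    apply nodup_In, in_map_iff in Ha as [p [<- Hp]]. apply HPD; auto. }
  eapply Rle_trans; [apply lsum_incl_le with (M := list_prod La Lb); auto|].
  - intros [a b] Hp. apply in_prod_iff.
    split; apply nodup_In, in_map_iff; exists (a, b); auto.
  - intros; apply Rmult_le_pos; auto.
  - rewrite lsum_prod. apply Rmult_le_compat; auto; apply lsum_nonneg; auto.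
Qed.

Lemma schur_pointwise N sigma (X a b : list Z -> R) k G :
  (forall k', In k' G -> 0 < X k') ->
  wt N sigma k * lsum (fun k' => X k' * (a (vsub N k k') * b k')) G ^ 2 <=
    lsum (fun k' => X k' ^ 2 * wratio N sigma k k') G *
    lsum (fun k' => wt N sigma (vsub N k k') * a (vsub N k k') ^ 2 * (wt N sigma k' * b k' ^ 2)) G.
Proof.
  intros HX.
  assert (Hrho : forall k', In k' G -> 0 < X k' ^ 2 * wratio N sigma k k')
    by (intros; apply Rmult_lt_0_compat; [apply pow_lt; auto | apply wratio_pos]).
  pose proof (lsum_wCS (fun k' => X k' * (a (vsub N k k') * b k')) _ G Hrho) as HCS. pose proof (wt_pos N sigma k).
  eapply Rle_trans; [apply Rmult_le_compat_l; [lra | exact HCS]|].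
  rewrite <- Rmult_assoc, (Rmult_comm (wt N sigma k)), Rmult_assoc, <- lsum_scal. apply Req_le. f_equal. apply lsum_ext.
  intros k' Hk'. specialize (HX k' Hk'). unfold wratio.
  pose proof (wt_pos N sigma (vsub N k k')). pose proof (wt_pos N sigma k').
  field. repeat split; lra.
Qed.

Lemma schur_test N alpha sigma (X : list Z -> list Z -> R) C (u v : list Z -> Cpx) A B :
  0 <= C -> (forall k k', 0 < X k k') ->
  (forall k rad, length k = N ->
     lsum (fun k' => X k k' ^ 2 * wratio N sigma k k') (box N rad) <= C) ->
  SqNormLe N alpha sigma 0 (fun k => Cmod (u k)) A ->
  SqNormLe N alpha sigma 0 (fun k => Cmod (v k)) B ->
  KernelBound N sigma (fun k k' => X k k' * (Cmod (u (vsub N k k')) * Cmod (v k'))) (C * (A * B)).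
Proof.
  intros HC0 HX HC Hu Hv F G HF HG.
  set (Pu := fun y => wt N sigma y * Cmod (u y) ^ 2). set (Pv := fun y => wt N sigma y * Cmod (v y) ^ 2).
  assert (HPu : forall y, 0 <= Pu y) by (intros; apply Rmult_le_pos; [left; apply wt_pos | apply pow2_ge_0]).
  assert (HPv : forall y, 0 <= Pv y) by (intros; apply Rmult_le_pos; [left; apply wt_pos | apply pow2_ge_0]).
  eapply Rle_trans with (lsum (fun k => C * lsum (fun k' => Pu (vsub N k k') * Pv k') (G k)) F).
  - apply lsum_le. intros k Hk.
    eapply Rle_trans;
      [apply (schur_pointwise N sigma (X k) (fun y => Cmod (u y)) (fun y => Cmod (v y))); auto|].
    apply Rmult_le_compat_r; [apply lsum_nonneg; intros; apply Rmult_le_pos; auto|].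
    destruct (HG k Hk) as [HGN HGD].
    destruct (box_cover N (G k)) as [rad Hrad]; [intros k' Hk'; apply HGD; auto|].
    eapply Rle_trans; [apply lsum_incl_le with (M := box N rad); auto|].
    + intros k' _. apply Rmult_le_pos; [apply pow2_ge_0 | left; apply wratio_pos].
    + apply HC, HF; auto.
  - rewrite lsum_scal. apply Rmult_le_compat_l; auto.
    apply conv_pair_bound with (N := N); auto; apply sqnorm_wt with alpha; auto.
Qed.

Lemma le_eps x y K : 0 <= K -> (forall e, 0 < e <= 1 -> x <= y + e * K) -> x <= y.
Proof.
  intros HK H. apply Rnot_lt_le. intros Hxy.
  set (e := Rmin 1 ((x - y) / (2 * (K + 1)))).
  assert (He : 0 < e <= 1)
    by (unfold e; split; [apply Rmin_pos; [lra | apply Rdiv_lt_0_compat; lra] | apply Rmin_l]).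
  specialize (H e He).
  assert (e <= (x - y) / (2 * (K + 1))) by apply Rmin_r.
  assert (e * K <= (x - y) / (2 * (K + 1)) * K) by (apply Rmult_le_compat_r; lra).
  assert ((x - y) / (2 * (K + 1)) * K < x - y).
  { apply Rmult_lt_reg_r with (2 * (K + 1)); [lra|].
    replace ((x - y) / (2 * (K + 1)) * K * (2 * (K + 1))) with ((x - y) * K) by (field; lra). nra. }
  lra.
Qed.

Lemma sqnorm_of_kernel_bound N alpha sigma (T : list Z -> list Z -> R) (val : list Z -> R) C :
  (forall j, (j < N)%nat -> 0 <= sigma j) ->
  (forall k k', 0 <= T k k') -> (forall k, 0 <= val k) -> KernelBound N sigma T C ->
  (forall k e, InDotZN N k -> 0 < e ->
     exists G, FinSub (ConvDom N k) G /\ val k <= lsum (T k) G + e) ->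
  SqNormLe N alpha sigma 0 val C.
Proof.
  intros Hs HT Hval Hbound Happ F HF.
  rewrite (lsum_ext _ (fun k => wt N sigma k * val k ^ 2)) by (intros; rewrite Gweight_wt; auto).
  assert (Hwt : forall k, 1 <= wt N sigma k) by (intros; apply wt_ge1; auto).
  assert (HC0 : 0 <= C)
    by (apply Rle_trans with (2 := Hbound [] (fun _ => []) (FinSub_nil _) (fun _ H => False_ind _ H));
        simpl; lra).
  set (Q := sqrt C).
  apply le_eps with (K := lsum (fun k => wt N sigma k * (2 * Q + 1)) F).
  { apply lsum_nonneg. intros k _. pose proof (Hwt k). pose proof (sqrt_pos C) as HQ. fold Q in HQ. nra. }
  intros e He.
  assert (HG : forall k, exists G, InDotZN N k ->
                 FinSub (ConvDom N k) G /\ val k <= lsum (T k) G + e).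
  { intros k. destruct (Classical_Prop.classic (InDotZN N k)) as [Hk|Hk].
    - destruct (Happ k e Hk (proj1 He)) as [G HG]. exists G; auto.
    - exists []. intros; contradiction. }
  destruct (choice _ HG) as [Gf HGf].
  assert (Hsingle : forall k, In k F -> lsum (T k) (Gf k) <= Q).
  { intros k Hk. assert (Hk' : InDotZN N k) by (apply HF; auto).
    assert (0 <= lsum (T k) (Gf k)) by (apply lsum_nonneg; auto).
    assert (H1 : wt N sigma k * lsum (T k) (Gf k) ^ 2 + 0 <= C).
    { apply (Hbound [k] Gf); [split; [repeat constructor; intros [] | intros ? [<-|[]]; auto]|].
      intros ? [<-|[]]. apply HGf; auto. }
    pose proof (Hwt k). pose proof (pow2_ge_0 (lsum (T k) (Gf k))).
    unfold Q. rewrite <- (sqrt_pow2 (lsum (T k) (Gf k))) by auto. apply sqrt_le_1_alt. nra. }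
  apply Rle_trans with
    (lsum (fun k => wt N sigma k * lsum (T k) (Gf k) ^ 2 + e * (wt N sigma k * (2 * Q + 1))) F).
  - apply lsum_le. intros k Hk. destruct (HGf k (proj2 HF k Hk)) as [_ Hv].
    specialize (Hsingle k Hk). pose proof (Hval k). pose proof (Hwt k).
    assert (0 <= lsum (T k) (Gf k)) by (apply lsum_nonneg; auto).
    assert (val k ^ 2 <= lsum (T k) (Gf k) ^ 2 + e * (2 * Q + 1)) by (simpl; nra).
    nra.
  - rewrite lsum_plus, lsum_scal. assert (lsum _ F <= C) by (apply Hbound; auto; intros; apply HGf, HF; auto).
    lra.
Qed.

(* Since w >= 1, the convolution sum is absolutely convergent:
   sum_k' |u(k-k')| |v(k')| <= (|u|^2 + |v|^2)/2. *)
Lemma conv_l1_bound N alpha sigma (u v : list Z -> Cpx) A B k :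
  (forall j, (j < N)%nat -> 0 <= sigma j) ->
  SqNormLe N alpha sigma 0 (fun k => Cmod (u k)) A ->
  SqNormLe N alpha sigma 0 (fun k => Cmod (v k)) B -> InDotZN N k ->
  forall G, FinSub (ConvDom N k) G ->
    lsum (fun k' => Cmod (u (vsub N k k')) * Cmod (v k')) G <= (A + B) / 2.
Proof.
  intros Hs Hu Hv Hk G [HGN HGD].
  apply Rle_trans with (lsum (fun k' => / 2 * (wt N sigma (vsub N k k') * Cmod (u (vsub N k k')) ^ 2
                                              + wt N sigma k' * Cmod (v k') ^ 2)) G).
  - apply lsum_le. intros k' _.
    pose proof (wt_ge1 N sigma (vsub N k k') Hs). pose proof (wt_ge1 N sigma k' Hs).
    pose proof (pow2_ge_0 (Cmod (u (vsub N k k')))). pose proof (pow2_ge_0 (Cmod (v k'))).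
    pose proof (pow2_ge_0 (Cmod (u (vsub N k k')) - Cmod (v k'))). simpl in *. nra.
  - rewrite lsum_scal, lsum_plus.
    assert (lsum (fun k' => wt N sigma (vsub N k k') * Cmod (u (vsub N k k')) ^ 2) G <= A).
    { rewrite <- (lsum_map (fun y => wt N sigma y * Cmod (u y) ^ 2) (vsub N k)).
      apply (sqnorm_wt N alpha sigma u A Hu). split.
      - apply NoDup_map_in; auto. intros a b Ha Hb E.
        apply (vsub_inj_r N k); auto; [apply HGD, Ha | apply HGD, Hb].
      - intros y Hy. apply in_map_iff in Hy as [k' [<- Hk']].
        destruct (HGD k' Hk') as [Hk'1 Hk'2]. apply vsub_nonzero; auto; [apply Hk | apply Hk'1]. }
    assert (lsum (fun k' => wt N sigma k' * Cmod (v k') ^ 2) G <= B)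
      by (apply (sqnorm_wt N alpha sigma v B Hv); split; auto; intros; apply HGD; auto).
    lra.
Qed.

(* The constant sqrt(C+1) of the statement absorbs any C >= 0. *)
Lemma sqnorm_const N alpha sigma g C A B : 0 <= C -> 0 <= A -> 0 <= B ->
  SqNormLe N alpha sigma 0 g (C * (A * B)) ->
  SqNormLe N alpha sigma 0 g (sqrt (C + 1) ^ 2 * A * B).
Proof.
  intros HC HA HB H F HF. eapply Rle_trans; [apply H; auto|].
  rewrite <- Rsqr_pow2, Rsqr_sqrt by lra. assert (0 <= A * B) by nra. nra.
Qed.

Lemma product_exists N alpha sigma (u v : list Z -> Cpx) A B :
  (forall j, (j < N)%nat -> 0 <= sigma j) ->
  SqNormLe N alpha sigma 0 (fun k => Cmod (u k)) A ->
  SqNormLe N alpha sigma 0 (fun k => Cmod (v k)) B ->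
  exists w, IsProduct N u v w.
Proof.
  intros Hs Hu Hv.
  assert (Hex : forall k, exists s : Cpx, InDotZN N k ->
                 CHasSum (ConvDom N k) (fun k' => Cmul (u (vsub N k k')) (v k')) s).
  { intros k. destruct (Classical_Prop.classic (InDotZN N k)) as [Hk|Hk];
      [|exists (0, 0); intros; contradiction].
    pose proof (conv_l1_bound N alpha sigma u v A B k Hs Hu Hv Hk) as Hb.
    destruct (signed_sum_exists (ConvDom N k) (fun k' => fst (Cmul (u (vsub N k k')) (v k')))
                (fun k' => Cmod (u (vsub N k k')) * Cmod (v k')) ((A + B) / 2)) as [s1 Hs1]; auto.
    { intros k' _. rewrite <- Cmod_mul. apply Cmod_fst. }
    destruct (signed_sum_exists (ConvDom N k) (fun k' => snd (Cmul (u (vsub N k k')) (v k')))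
                (fun k' => Cmod (u (vsub N k k')) * Cmod (v k')) ((A + B) / 2)) as [s2 Hs2]; auto.
    { intros k' _. rewrite <- Cmod_mul. apply Cmod_snd. }
    exists (s1, s2). intros _. split; auto. }
  destruct (choice _ Hex) as [w Hw]. exists w. exact Hw.
Qed.

Lemma product_bound N alpha sigma : (forall j, (j < N)%nat -> sigma j > 1/2) ->
  exists Cst, 0 < Cst /\
    forall (u v : list Z -> Cpx) (A B : R),
      SqNormLe N alpha sigma 0 (fun k => Cmod (u k)) A ->
      SqNormLe N alpha sigma 0 (fun k => Cmod (v k)) B ->
      forall w, IsProduct N u v w ->
        SqNormLe N alpha sigma 0 (fun k => Cmod (w k)) (Cst ^ 2 * A * B).
Proof.
  intros Hs. destruct (wratio_box_bound N sigma Hs) as [Cm [HCm0 HCm]].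
  assert (Hs0 : forall j, (j < N)%nat -> 0 <= sigma j) by (intros j Hj; specialize (Hs j Hj); lra).
  exists (sqrt (Cm + 1)). split; [apply sqrt_lt_R0; lra|].
  intros u v A B Hu Hv w Hw.
  apply sqnorm_const; [auto | eapply sqnorm_nonneg; eauto | eapply sqnorm_nonneg; eauto|].
  apply sqnorm_of_kernel_bound with (T := fun k k' => 1 * (Cmod (u (vsub N k k')) * Cmod (v k'))); auto.
  - intros; rewrite Rmult_1_l; apply Rmult_le_pos; apply Cmod_nonneg.
  - intros; apply Cmod_nonneg.
  - apply schur_test with alpha; auto; [intros; lra|].
    intros k rad Hk. rewrite (lsum_ext _ (wratio N sigma k)) by (intros; ring). auto.
  - intros k e Hk He.
    destruct (CHasSum_approx _ _ _ (e / 2) (Hw k Hk)) as [G [HG [H1 H2]]]; [lra|].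
    exists G. split; auto.
    pose proof (Cmod_approx (w k) (Clsum (fun k' => Cmul (u (vsub N k k')) (v k')) G) (e / 2) H1 H2).
    pose proof (Cmod_lsum (fun k' => Cmul (u (vsub N k k')) (v k')) G).
    rewrite (lsum_ext _ (fun k' => 1 * (Cmod (u (vsub N k k')) * Cmod (v k')))) in *
      by (intros; rewrite Cmod_mul; ring).
    lra.
Qed.

Lemma fiber_sum (t q : R) (c M : list Z -> R) n rad : t <> 0 -> 1 < q -> (forall s, 0 <= M s) ->
  lsum (fun x => lsum (fun s => jpow (t * IZR x + c s) (- q) * M s) (box n rad)) (zrange rad)
    <= line_const t q * lsum M (box n rad).
Proof.
  intros Ht Hq HM. rewrite lsum_swap, <- lsum_scal. apply lsum_le. intros s _.
  rewrite (lsum_ext _ (fun x => M s * jpow (t * IZR x + c s) (- q))) by (intros; ring).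
  rewrite lsum_scal, Rmult_comm. apply Rmult_le_compat_r; auto.
  apply line_sum; auto. apply zrange_NoDup.
Qed.

(* Part (ii), resonance on k' or on k-k': the factor <alpha.k'>^-4beta (resp.
   <alpha.(k-k')>^-4beta) makes the Schur sums over the first coordinate converge,
   since alpha_1 <> 0 and 4 beta > 1, while the remaining coordinates have
   sigma_j > 1/2. *)
Lemma resonant_box_bound n alpha sigma beta : sigma 0%nat = 0 ->
  (forall j, (j < n)%nat -> sigma (S j) > 1/2) -> alpha 0%nat <> 0 -> beta > 1/4 ->
  exists C, 0 <= C /\ forall k rad, length k = S n ->
    lsum (fun k' => jpow (adot (S n) alpha k') (- (2 * beta)) ^ 2 * wratio (S n) sigma k k')
      (box (S n) rad) <= C /\
    lsum (fun k' => jpow (adot (S n) alpha (vsub (S n) k k')) (- (2 * beta)) ^ 2 *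
                    wratio (S n) sigma k k') (box (S n) rad) <= C.
Proof.
  intros H0 Hs Ha Hb.
  destruct (wratio_box_bound n (fun j => sigma (S j)) Hs) as [Cm [HCm0 HCm]].
  set (C1 := line_const (alpha 0%nat) (2 * (2 * beta))).
  set (C2 := line_const (- alpha 0%nat) (2 * (2 * beta))).
  assert (0 < C1) by (apply line_const_pos; lra). assert (0 < C2) by (apply line_const_pos; lra).
  exists ((C1 + C2) * Cm). split; [apply Rmult_le_pos; lra|].
  intros k rad Hk. destruct k as [|k0 r]; [discriminate|]. injection Hk as Hk.
  set (alpha' := fun j => alpha (S j)).
  set (M := wratio n (fun j => sigma (S j)) r).
  assert (HM : forall s, 0 <= M s) by (intros; left; apply wratio_pos).
  assert (HMs : lsum M (box n rad) <= Cm) by (apply HCm; auto).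
  split; rewrite lsum_box_S.
  - rewrite (lsum_ext _ (fun x => lsum (fun s =>
      jpow (alpha 0%nat * IZR x + adot n alpha' s) (- (2 * (2 * beta))) * M s) (box n rad))).
    2:{ intros x _. apply lsum_ext. intros s _. rewrite wratio_S, adot_S, jpow_sq; auto. }
    eapply Rle_trans; [apply fiber_sum; auto; lra|]. fold C1. nra.
  - rewrite (lsum_ext _ (fun x => lsum (fun s =>
      jpow (- alpha 0%nat * IZR x + (alpha 0%nat * IZR k0 + adot n alpha' (vsub n r s)))
        (- (2 * (2 * beta))) * M s) (box n rad))).
    2:{ intros x _. apply lsum_ext. intros s _.
        rewrite wratio_S, vsub_S, adot_S, jpow_sq, minus_IZR by auto.
        unfold alpha', M. f_equal. f_equal. ring. }
    eapply Rle_trans; [apply fiber_sum; auto; lra|]. fold C2. nra.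
Qed.

(* Part (ii), resonance on the output frequency k.  The data enter only through
   their moduli restricted to \dot Z^N (their value at the origin is irrelevant). *)
Definition in_dot (N : nat) (y : list Z) : bool :=
  if excluded_middle_informative (InDotZN N y) then true else false.

Definition trunc (N : nat) (u : list Z -> Cpx) (y : list Z) : R :=
  if in_dot N y then Cmod (u y) else 0.

Lemma trunc_nonneg N u y : 0 <= trunc N u y.
Proof. unfold trunc. destruct (in_dot N y); [apply Cmod_nonneg | lra]. Qed.

Lemma trunc_on N u y : InDotZN N y -> trunc N u y = Cmod (u y).
Proof. intros H. unfold trunc, in_dot. destruct (excluded_middle_informative _); tauto. Qed.

Lemma trunc_sq_bound N alpha sigma u A : SqNormLe N alpha sigma 0 (fun k => Cmod (u k)) A ->
  forall L, NoDup L -> lsum (fun y => wt N sigma y * trunc N u y ^ 2) L <= A.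
Proof.
  intros H L HL.
  rewrite (lsum_ext _ (fun y => if in_dot N y then wt N sigma y * Cmod (u y) ^ 2 else 0))
    by (intros y _; unfold trunc; destruct (in_dot N y); simpl; ring).
  rewrite lsum_if_filter. apply (sqnorm_wt N alpha sigma u A H).
  split; [apply NoDup_filter; auto|]. intros y Hy. apply filter_In in Hy as [_ Hy].
  unfold in_dot in Hy. destruct (excluded_middle_informative (InDotZN N y)); auto. discriminate.
Qed.

Definition fiber_norm (n : nat) (sigma : nat -> R) (g : list Z -> R) (rad : nat) (r' : list Z) : R :=
  lsum (fun y => wt (S n) sigma (y :: r') * g (y :: r') ^ 2) (zrange rad).

Lemma fiber_norm_nonneg n sigma g rad r' : 0 <= fiber_norm n sigma g rad r'.
Proof.
  apply lsum_nonneg. intros. apply Rmult_le_pos; [left; apply wt_pos | apply pow2_ge_0].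
Qed.

Section FirstCoordinate.
Variables (n : nat) (sigma : nat -> R).
Hypothesis Hsigma0 : sigma 0%nat = 0.

Lemma fiber_shift_le (a : list Z -> R) k0 rb R2 r' :
  (Z.abs k0 + Z.of_nat rb <= Z.of_nat R2)%Z ->
  wt n (fun j => sigma (S j)) r' * lsum (fun x => a ((k0 - x)%Z :: r') ^ 2) (zrange rb)
    <= fiber_norm n sigma a R2 r'.
Proof.
  intros HR. rewrite <- lsum_scal. unfold fiber_norm.
  rewrite (lsum_ext _ (fun x => wt (S n) sigma ((k0 - x)%Z :: r') * a ((k0 - x)%Z :: r') ^ 2))
    by (intros; rewrite wt_S; auto).
  rewrite <- (lsum_map (fun y => wt (S n) sigma (y :: r') * a (y :: r') ^ 2) (fun x => (k0 - x)%Z)).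
  apply lsum_incl_le.
  - apply NoDup_map_in; [apply zrange_NoDup | intros; lia].
  - intros y Hy. apply in_map_iff in Hy as [x [<- Hx]]. apply zrange_In in Hx. apply zrange_In. lia.
  - intros. apply Rmult_le_pos; [left; apply wt_pos | apply pow2_ge_0].
Qed.

(* Unshifted fibers are exactly fiber norms (the first coordinate has weight 1). *)
Lemma fiber_norm_eq (b : list Z -> R) rb s :
  wt n (fun j => sigma (S j)) s * lsum (fun x => b (x :: s) ^ 2) (zrange rb) = fiber_norm n sigma b rb s.
Proof. rewrite <- lsum_scal. apply lsum_ext. intros. rewrite wt_S; auto. Qed.

(* For k = (k0, r): Cauchy-Schwarz in the first coordinate of k', then the Schur test
   in the remaining ones, bounds the convolution by fiber norms of the data. *)
Lemma fiber_schur (a b : list Z -> R) Cm k0 r G rb R2 :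
  (forall y, 0 <= a y) -> (forall y, 0 <= b y) ->
  lsum (wratio n (fun j => sigma (S j)) r) (box n rb) <= Cm ->
  NoDup G -> incl G (box (S n) rb) -> (Z.abs k0 + Z.of_nat rb <= Z.of_nat R2)%Z ->
  wt n (fun j => sigma (S j)) r * lsum (fun k' => a (vsub (S n) (k0 :: r) k') * b k') G ^ 2 <=
    Cm * lsum (fun s => fiber_norm n sigma a R2 (vsub n r s) * fiber_norm n sigma b rb s) (box n rb).
Proof.
  intros Ha Hb HCm HGN HGR HR.
  set (sg := fun j => sigma (S j)).
  set (fa := fun r' => sqrt (lsum (fun x => a ((k0 - x)%Z :: r') ^ 2) (zrange rb))).
  set (fb := fun s => sqrt (lsum (fun x => b (x :: s) ^ 2) (zrange rb))).
  assert (Hsq : forall h : Z -> R, sqrt (lsum (fun x => h x ^ 2) (zrange rb)) ^ 2 =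
                                  lsum (fun x => h x ^ 2) (zrange rb))
    by (intros; rewrite <- Rsqr_pow2; apply Rsqr_sqrt, lsum_nonneg; intros; apply pow2_ge_0).
  assert (Hdom : lsum (fun k' => a (vsub (S n) (k0 :: r) k') * b k') G <=
                 lsum (fun s => 1 * (fa (vsub n r s) * fb s)) (box n rb)).
  { eapply Rle_trans; [apply lsum_incl_le with (M := box (S n) rb); auto;
                       intros; apply Rmult_le_pos; auto|].
    rewrite lsum_box_S, lsum_swap. apply lsum_le. intros s _. rewrite Rmult_1_l.
    eapply Rle_trans; [|apply lsum_CS_sqrt]. apply Req_le, lsum_ext. intros. rewrite vsub_S. reflexivity. }
  assert (H0 : 0 <= lsum (fun k' => a (vsub (S n) (k0 :: r) k') * b k') G)
    by (apply lsum_nonneg; intros; apply Rmult_le_pos; auto).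
  pose proof (wt_pos n sg r).
  eapply Rle_trans; [apply Rmult_le_compat_l; [lra | apply pow_incr; split; [exact H0 | exact Hdom]]|].
  eapply Rle_trans; [apply (schur_pointwise n sg (fun _ => 1) fa fb r); intros; lra|].
  apply Rmult_le_compat.
  - apply lsum_nonneg. intros; rewrite pow1, Rmult_1_l; left; apply wratio_pos.
  - apply lsum_nonneg. intros. apply Rmult_le_pos; apply Rmult_le_pos;
      try (left; apply wt_pos); apply pow2_ge_0.
  - rewrite (lsum_ext _ (wratio n sg r)) by (intros; ring). exact HCm.
  - apply lsum_le. intros s _. apply Rmult_le_compat.
    + apply Rmult_le_pos; [left; apply wt_pos | apply pow2_ge_0].
    + apply Rmult_le_pos; [left; apply wt_pos | apply pow2_ge_0].
    + unfold fa. rewrite Hsq. apply fiber_shift_le; auto.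
    + unfold fb. rewrite Hsq. apply Req_le, fiber_norm_eq.
Qed.

Lemma fiber_pair_bound (a b : list Z -> R) A B ra rb :
  (forall L, NoDup L -> lsum (fun y => wt (S n) sigma y * a y ^ 2) L <= A) ->
  (forall L, NoDup L -> lsum (fun y => wt (S n) sigma y * b y ^ 2) L <= B) ->
  lsum (fun r => lsum (fun s => fiber_norm n sigma a (ra + rb) (vsub n r s) *
                                fiber_norm n sigma b rb s) (box n rb)) (box n ra) <= A * B.
Proof.
  intros HA HB.
  assert (HA0 : 0 <= A) by (specialize (HA [] (NoDup_nil _)); simpl in HA; lra).
  rewrite lsum_swap.
  assert (HUs : forall s, In s (box n rb) ->
                  lsum (fun r => fiber_norm n sigma a (ra + rb) (vsub n r s)) (box n ra) <= A).
  { intros s Hs. rewrite <- (lsum_map (fiber_norm n sigma a (ra + rb)) (fun r => vsub n r s)).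
    eapply Rle_trans; [apply lsum_incl_le with (M := box n (ra + rb))|].
    - apply NoDup_map_in; [apply box_NoDup|]. intros x y Hx Hy E.
      apply box_In in Hx as [Hx _]. apply box_In in Hy as [Hy _]. apply (vsub_inj_l n s); auto.
    - intros y Hy. apply in_map_iff in Hy as [r [<- Hr]]. apply vsub_in_box; auto.
    - intros; apply fiber_norm_nonneg.
    - eapply Rle_trans; [|apply (HA (box (S n) (ra + rb)) (box_NoDup _ _))].
      rewrite lsum_box_S, lsum_swap. apply Req_le. reflexivity. }
  apply Rle_trans with (lsum (fun s => A * fiber_norm n sigma b rb s) (box n rb)).
  - apply lsum_le. intros s Hs.
    rewrite (lsum_ext _ (fun r => fiber_norm n sigma b rb s *
                                  fiber_norm n sigma a (ra + rb) (vsub n r s))) by (intros; ring).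
    rewrite lsum_scal, (Rmult_comm A). apply Rmult_le_compat_l; [apply fiber_norm_nonneg | auto].
  - rewrite lsum_scal. apply Rmult_le_compat_l; auto.
    eapply Rle_trans; [|apply (HB (box (S n) rb) (box_NoDup _ _))].
    rewrite lsum_box_S, lsum_swap. apply Req_le. reflexivity.
Qed.
End FirstCoordinate.

Lemma output_resonance_pointwise n alpha sigma beta (u v : list Z -> Cpx) Cm k0 r G ra rb :
  sigma 0%nat = 0 -> length r = n ->
  lsum (wratio n (fun j => sigma (S j)) r) (box n rb) <= Cm ->
  FinSub (ConvDom (S n) (k0 :: r)) G -> incl G (box (S n) rb) -> (Z.abs k0 <= Z.of_nat ra)%Z ->
  wt (S n) sigma (k0 :: r) *
    lsum (fun k' => jpow (adot (S n) alpha (k0 :: r)) (- (2 * beta)) *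
                    (Cmod (u (vsub (S n) (k0 :: r) k')) * Cmod (v k'))) G ^ 2
  <= jpow (alpha 0%nat * IZR k0 + adot n (fun j => alpha (S j)) r) (- (2 * (2 * beta))) *
     (Cm * lsum (fun s => fiber_norm n sigma (trunc (S n) u) (ra + rb) (vsub n r s) *
                          fiber_norm n sigma (trunc (S n) v) rb s) (box n rb)).
Proof.
  intros H0 Hr HCm [HGN HGD] HGR Hk0.
  rewrite lsum_scal, wt_S, <- adot_S, <- (jpow_sq _ (2 * beta)) by auto.
  rewrite (lsum_ext _ (fun k' => trunc (S n) u (vsub (S n) (k0 :: r) k') * trunc (S n) v k')).
  2:{ intros k' Hk'. destruct (HGD k' Hk') as [Hk'1 Hk'2].
      rewrite !trunc_on; auto. apply vsub_nonzero; auto; [simpl; lia | apply Hk'1]. }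
  set (J := jpow (adot (S n) alpha (k0 :: r)) (- (2 * beta))).
  set (Sab := lsum (fun k' => trunc (S n) u (vsub (S n) (k0 :: r) k') * trunc (S n) v k') G).
  replace (wt n (fun j => sigma (S j)) r * (J * Sab) ^ 2)
    with (J ^ 2 * (wt n (fun j => sigma (S j)) r * Sab ^ 2)) by ring.
  apply Rmult_le_compat_l; [apply pow2_ge_0|].
  apply fiber_schur; auto; [apply trunc_nonneg | apply trunc_nonneg | lia].
Qed.

(* The resonance-on-k term: after the fiber estimate, the factor <alpha.k>^-4beta
   is summed over the first coordinate of k, and the fiber norms over the others. *)
Lemma output_resonance_bound n alpha sigma beta : sigma 0%nat = 0 ->
  (forall j, (j < n)%nat -> sigma (S j) > 1/2) -> alpha 0%nat <> 0 -> beta > 1/4 ->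
  exists C, 0 <= C /\ forall (u v : list Z -> Cpx) A B,
    SqNormLe (S n) alpha sigma 0 (fun k => Cmod (u k)) A ->
    SqNormLe (S n) alpha sigma 0 (fun k => Cmod (v k)) B ->
    KernelBound (S n) sigma (fun k k' => jpow (adot (S n) alpha k) (- (2 * beta)) *
                               (Cmod (u (vsub (S n) k k')) * Cmod (v k'))) (C * (A * B)).
Proof.
  intros H0 Hs Ha Hb.
  destruct (wratio_box_bound n (fun j => sigma (S j)) Hs) as [Cm [HCm0 HCm]].
  set (C1 := line_const (alpha 0%nat) (2 * (2 * beta))).
  assert (HC1 : 0 < C1) by (apply line_const_pos; lra).
  exists (C1 * Cm). split; [apply Rmult_le_pos; lra|].
  intros u v A B Hu Hv F G HF HG.
  destruct (box_cover (S n) F) as [ra Hra]; [intros k Hk; apply HF; auto|].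
  destruct (box_cover (S n) (flat_map G F)) as [rb Hrb].
  { intros k' Hk'. apply in_flat_map in Hk' as [k [Hk Hk']]. apply (HG k Hk); auto. }
  set (Phi := fun r => lsum (fun s => fiber_norm n sigma (trunc (S n) u) (ra + rb) (vsub n r s) *
                                      fiber_norm n sigma (trunc (S n) v) rb s) (box n rb)).
  assert (HPhi : forall r, 0 <= Phi r)
    by (intros; apply lsum_nonneg; intros; apply Rmult_le_pos; apply fiber_norm_nonneg).
  set (Psi := fun x r => jpow (alpha 0%nat * IZR x + adot n (fun j => alpha (S j)) r)
                              (- (2 * (2 * beta))) * (Cm * Phi r)).
  apply Rle_trans with (lsum (fun k => Psi (hd 0%Z k) (tl k)) (box (S n) ra)).
  - apply Rle_trans with (lsum (fun k => Psi (hd 0%Z k) (tl k)) F).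
    + apply lsum_le. intros k Hk. destruct (proj2 HF k Hk) as [Hkl _].
      destruct k as [|k0 r]; [discriminate|]. injection Hkl as Hkl.
      apply output_resonance_pointwise; auto.
      * intros k' Hk'. apply Hrb, in_flat_map. exists (k0 :: r); auto.
      * pose proof (box_nth_bound (S n) ra (k0 :: r) 0 (Hra _ Hk) ltac:(lia)). simpl in *. lia.
    + apply lsum_incl_le; [apply HF | auto|]. intros k _.
      apply Rmult_le_pos; [left; apply jpow_pos | apply Rmult_le_pos; auto].
  - rewrite lsum_box_S. simpl hd; simpl tl. unfold Psi.
    eapply Rle_trans; [apply fiber_sum; [auto | lra | intros; apply Rmult_le_pos; auto]|].
    fold C1. rewrite lsum_scal, <- Rmult_assoc. apply Rmult_le_compat_l; [apply Rmult_le_pos; lra|].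
    apply (fiber_pair_bound n sigma (trunc (S n) u) (trunc (S n) v) A B ra rb);
      apply trunc_sq_bound with alpha; auto.
Qed.

(* A kernel dominated by K (T1 + T2 + T3) inherits the three kernel bounds,
   via (s1 + s2 + s3)^2 <= 3 (s1^2 + s2^2 + s3^2). *)
Lemma kernel_bound_split3 N sigma (T T1 T2 T3 : list Z -> list Z -> R) K C1 C2 C3 :
  (forall k k', 0 <= T k k') ->
  (forall k k', 0 <= T1 k k') -> (forall k k', 0 <= T2 k k') -> (forall k k', 0 <= T3 k k') ->
  (forall k k', T k k' <= K * (T1 k k' + T2 k k' + T3 k k')) ->
  KernelBound N sigma T1 C1 -> KernelBound N sigma T2 C2 -> KernelBound N sigma T3 C3 ->
  KernelBound N sigma T (3 * K ^ 2 * (C1 + C2 + C3)).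
Proof.
  intros HT H1 H2 H3 Hdom B1 B2 B3 F G HF HG.
  specialize (B1 F G HF HG). specialize (B2 F G HF HG). specialize (B3 F G HF HG).
  apply Rle_trans with (lsum (fun k => 3 * K ^ 2 *
    (wt N sigma k * lsum (T1 k) (G k) ^ 2 + wt N sigma k * lsum (T2 k) (G k) ^ 2 +
     wt N sigma k * lsum (T3 k) (G k) ^ 2)) F).
  - apply lsum_le. intros k _.
    assert (0 <= lsum (T k) (G k)) by (apply lsum_nonneg; auto).
    assert (0 <= lsum (T1 k) (G k)) by (apply lsum_nonneg; auto).
    assert (0 <= lsum (T2 k) (G k)) by (apply lsum_nonneg; auto).
    assert (0 <= lsum (T3 k) (G k)) by (apply lsum_nonneg; auto).
    assert (Hs : lsum (T k) (G k) <= K * (lsum (T1 k) (G k) + lsum (T2 k) (G k) + lsum (T3 k) (G k)))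
      by (rewrite <- !lsum_plus, <- lsum_scal; apply lsum_le; auto).
    set (s := lsum (T k) (G k)) in *. set (s1 := lsum (T1 k) (G k)) in *.
    set (s2 := lsum (T2 k) (G k)) in *. set (s3 := lsum (T3 k) (G k)) in *.
    assert (s ^ 2 <= K ^ 2 * (s1 + s2 + s3) ^ 2)
      by (rewrite <- Rpow_mult_distr; apply pow_incr; lra).
    assert (K ^ 2 * (s1 + s2 + s3) ^ 2 <= K ^ 2 * (3 * (s1 ^ 2 + s2 ^ 2 + s3 ^ 2))).
    { apply Rmult_le_compat_l; [apply pow2_ge_0|].
      pose proof (pow2_ge_0 (s1 - s2)). pose proof (pow2_ge_0 (s2 - s3)).
      pose proof (pow2_ge_0 (s1 - s3)). simpl in *. lra. }
    pose proof (wt_pos N sigma k).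
    assert (wt N sigma k * s ^ 2 <= wt N sigma k * (K ^ 2 * (3 * (s1 ^ 2 + s2 ^ 2 + s3 ^ 2))))
      by (apply Rmult_le_compat_l; lra).
    lra.
  - rewrite lsum_scal, !lsum_plus. pose proof (pow2_ge_0 K). nra.
Qed.

Definition res_kernel (N : nat) (alpha : nat -> R) (beta : R) (u v : list Z -> Cpx)
    (k k' : list Z) : R :=
  Rpower (jbr (Rabs (adot N alpha k) * Rabs (adot N alpha (vsub N k k')) *
               Rabs (adot N alpha k'))) (- beta) * Cmod (u (vsub N k k')) * Cmod (v k').

Lemma res_kernel_nonneg N alpha beta u v k k' : 0 <= res_kernel N alpha beta u v k k'.
Proof.
  unfold res_kernel. apply Rmult_le_pos; [apply Rmult_le_pos|]; try apply Cmod_nonneg.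
  left; apply Rpower_pos.
Qed.

Lemma res_kernel_split N alpha beta u v k k' : 0 <= beta ->
  res_kernel N alpha beta u v k k' <= Rpower 3 (2 * beta) *
    (jpow (adot N alpha (vsub N k k')) (- (2 * beta)) * (Cmod (u (vsub N k k')) * Cmod (v k')) +
     jpow (adot N alpha k') (- (2 * beta)) * (Cmod (u (vsub N k k')) * Cmod (v k')) +
     jpow (adot N alpha k) (- (2 * beta)) * (Cmod (u (vsub N k k')) * Cmod (v k'))).
Proof.
  intros Hb. unfold res_kernel.
  pose proof (resonance_split beta (adot N alpha k) (adot N alpha (vsub N k k')) (adot N alpha k') Hb
                ltac:(rewrite adot_vsub; ring)) as HR.
  assert (0 <= Cmod (u (vsub N k k')) * Cmod (v k')) by (apply Rmult_le_pos; apply Cmod_nonneg).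
  rewrite Rmult_assoc. unfold jpow in *.
  apply Rmult_le_compat_r with (r := Cmod (u (vsub N k k')) * Cmod (v k')) in HR; auto.
  lra.
Qed.

Lemma res_kernel_bound n alpha sigma beta : sigma 0%nat = 0 ->
  (forall j, (j < n)%nat -> sigma (S j) > 1/2) -> alpha 0%nat <> 0 -> beta > 1/4 ->
  exists C, 0 <= C /\ forall (u v : list Z -> Cpx) A B,
    SqNormLe (S n) alpha sigma 0 (fun k => Cmod (u k)) A ->
    SqNormLe (S n) alpha sigma 0 (fun k => Cmod (v k)) B ->
    KernelBound (S n) sigma (res_kernel (S n) alpha beta u v) (C * (A * B)).
Proof.
  intros H0 Hs Ha Hb.
  destruct (resonant_box_bound n alpha sigma beta H0 Hs Ha Hb) as [C12 [HC12 HC12']].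
  destruct (output_resonance_bound n alpha sigma beta H0 Hs Ha Hb) as [C3 [HC3 HC3']].
  set (K := Rpower 3 (2 * beta)).
  exists (3 * K ^ 2 * (C12 + C12 + C3)). split; [pose proof (pow2_ge_0 K); nra|].
  intros u v A B Hu Hv.
  replace (3 * K ^ 2 * (C12 + C12 + C3) * (A * B))
    with (3 * K ^ 2 * (C12 * (A * B) + C12 * (A * B) + C3 * (A * B))) by ring.
  assert (Huv : forall k k', 0 <= Cmod (u (vsub (S n) k k')) * Cmod (v k'))
    by (intros; apply Rmult_le_pos; apply Cmod_nonneg).
  apply kernel_bound_split3 with
    (T1 := fun k k' => jpow (adot (S n) alpha (vsub (S n) k k')) (- (2 * beta)) *
                       (Cmod (u (vsub (S n) k k')) * Cmod (v k')))
    (T2 := fun k k' => jpow (adot (S n) alpha k') (- (2 * beta)) *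
                       (Cmod (u (vsub (S n) k k')) * Cmod (v k')))
    (T3 := fun k k' => jpow (adot (S n) alpha k) (- (2 * beta)) *
                       (Cmod (u (vsub (S n) k k')) * Cmod (v k'))).
  - apply res_kernel_nonneg.
  - intros; apply Rmult_le_pos; [left; apply jpow_pos | auto].
  - intros; apply Rmult_le_pos; [left; apply jpow_pos | auto].
  - intros; apply Rmult_le_pos; [left; apply jpow_pos | auto].
  - intros; apply res_kernel_split; lra.
  - apply schur_test with alpha; auto; [intros; apply jpow_pos|].
    intros k rad Hk. apply (proj2 (HC12' k rad Hk)).
  - apply schur_test with alpha; auto; [intros; apply jpow_pos|].
    intros k rad Hk. apply (proj1 (HC12' k rad Hk)).
  - apply HC3'; auto.
Qed.

(* The resonant convolution sums exist, since the kernel is dominated by the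
   absolutely summable |u(k-k')| |v(k')|. *)
Lemma res_sum_exists N alpha sigma beta (u v : list Z -> Cpx) A B :
  (forall j, (j < N)%nat -> 0 <= sigma j) -> 0 <= beta ->
  SqNormLe N alpha sigma 0 (fun k => Cmod (u k)) A ->
  SqNormLe N alpha sigma 0 (fun k => Cmod (v k)) B ->
  exists W : list Z -> R, (forall k, 0 <= W k) /\
    (forall k, InDotZN N k -> RHasSum (ConvDom N k) (res_kernel N alpha beta u v k) (W k)).
Proof.
  intros Hs Hb Hu Hv.
  assert (Hex : forall k, exists s, 0 <= s /\
            (InDotZN N k -> RHasSum (ConvDom N k) (res_kernel N alpha beta u v k) s)).
  { intros k. destruct (Classical_Prop.classic (InDotZN N k)) as [Hk|Hk];
      [|exists 0; split; [lra | intros; contradiction]].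
    destruct (nonneg_sum_exists (ConvDom N k) (res_kernel N alpha beta u v k) ((A + B) / 2))
      as [s Hsum].
    - intros; apply res_kernel_nonneg.
    - intros G HG. eapply Rle_trans; [|apply (conv_l1_bound N alpha sigma u v A B k Hs Hu Hv Hk G HG)].
      apply lsum_le. intros k' _. unfold res_kernel. rewrite Rmult_assoc.
      pose proof (jpow_le1 (Rabs (adot N alpha k) * Rabs (adot N alpha (vsub N k k')) *
                            Rabs (adot N alpha k')) beta Hb) as Hle.
      assert (0 <= Cmod (u (vsub N k k')) * Cmod (v k')) by (apply Rmult_le_pos; apply Cmod_nonneg).
      unfold jpow in Hle. nra.
    - exists s. split; [|auto]. apply (RHasSum_nonneg _ _ _ Hsum). intros; apply res_kernel_nonneg. }
  destruct (choice _ Hex) as [W HW]. exists W. split; intros; apply HW; auto.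
Qed.

Lemma res_product_bound N alpha (Halpha : NonResonant N alpha) (sigma : nat -> R) (beta : R) :
  (1 <= N)%nat -> sigma 0%nat = 0 -> (forall j, (1 <= j < N)%nat -> sigma j > 1/2) -> beta > 1/4 ->
  exists Cst, 0 < Cst /\
        forall (u v : list Z -> Cpx) (A B : R),
      SqNormLe N alpha sigma 0 (fun k => Cmod (u k)) A ->
      SqNormLe N alpha sigma 0 (fun k => Cmod (v k)) B ->
      exists W : list Z -> R,
        (forall k, InDotZN N k -> RHasSum (ConvDom N k) (res_kernel N alpha beta u v k) (W k)) /\
        SqNormLe N alpha sigma 0 W (Cst ^ 2 * A * B).
Proof.
  intros HN H0 Hs Hb. destruct N as [|n]; [lia|].
  assert (Hs' : forall j, (j < n)%nat -> sigma (S j) > 1/2) by (intros j Hj; apply Hs; lia).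
  assert (Hs0 : forall j, (j < S n)%nat -> 0 <= sigma j)
    by (intros [|j] Hj; [lra | specialize (Hs' j ltac:(lia)); lra]).
  destruct (res_kernel_bound n alpha sigma beta H0 Hs' (alpha0_nonzero n alpha Halpha) Hb)
    as [C [HC0 HC]].
  exists (sqrt (C + 1)). split; [apply sqrt_lt_R0; lra|].
  intros u v A B Hu Hv.
  destruct (res_sum_exists (S n) alpha sigma beta u v A B Hs0 ltac:(lra) Hu Hv) as [W [HW0 HW]].
  exists W. split; [exact HW|].
  apply sqnorm_const; [auto | eapply sqnorm_nonneg; eauto | eapply sqnorm_nonneg; eauto|].
  apply sqnorm_of_kernel_bound with (T := res_kernel (S n) alpha beta u v); auto.
  - apply res_kernel_nonneg.
  - intros k e Hk He. destruct (RHasSum_approx _ _ _ e (HW k Hk) He) as [G [HG HGa]].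
    exists G. split; auto. apply Rabs_def2 in HGa. lra.
Qed.

Theorem lemma2p2 (N : nat) (alpha : nat -> R) (Halpha : NonResonant N alpha) :
  (* (i) *)
  (forall sigma : nat -> R,
     (forall j, (j < N)%nat -> sigma j > 1/2) ->
     exists Cst, 0 < Cst /\
       forall (u v : list Z -> Cpx) (A B : R),
         SqNormLe N alpha sigma 0 (fun k => Cmod (u k)) A ->
         SqNormLe N alpha sigma 0 (fun k => Cmod (v k)) B ->
         (exists w, IsProduct N u v w) /\
         (forall w, IsProduct N u v w ->
            SqNormLe N alpha sigma 0 (fun k => Cmod (w k)) (Cst ^ 2 * A * B)))
  /\
  (* (ii) *)
  (forall (sigma : nat -> R) (beta : R),
     (1 <= N)%nat ->
     sigma 0%nat = 0 ->
     (forall j, (1 <= j < N)%nat -> sigma j > 1/2) ->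
     beta > 1/4 ->
     exists Cst, 0 < Cst /\
       forall (u v : list Z -> Cpx) (A B : R),
         SqNormLe N alpha sigma 0 (fun k => Cmod (u k)) A ->
         SqNormLe N alpha sigma 0 (fun k => Cmod (v k)) B ->
         exists W : list Z -> R,
           (forall k, InDotZN N k ->
              RHasSum (ConvDom N k)
                (fun k' => Rpower (jbr (Rabs (adot N alpha k) *
                                        Rabs (adot N alpha (vsub N k k')) *
                                        Rabs (adot N alpha k'))) (- beta)
                           * Cmod (u (vsub N k k')) * Cmod (v k'))
                (W k)) /\
           SqNormLe N alpha sigma 0 W (Cst ^ 2 * A * B)).
Proof.
  split.
  - intros sigma Hs. destruct (product_bound N alpha sigma Hs) as [Cst [HCst Hbound]].
    exists Cst. split; [exact HCst|]. intros u v A B Hu Hv. split; [|apply Hbound; auto].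
    apply (product_exists N alpha sigma u v A B); auto. intros j Hj. specialize (Hs j Hj). lra.
  - intros sigma beta HN H0 Hs Hb. exact (res_product_bound N alpha Halpha sigma beta HN H0 Hs Hb).
Qed.
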